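(* Assume (I), that $f(\cdot,i,\mathbf q)$ is $C^1$ on $[0,\infty)$ for all $i\in S$, $\mathbf q\in D_i$, that $f_t:=\partial_t f$ also satisfies (I), and that condition (R) holds. Then for any $i\in S$ and $Q,Q^*\in\mathcal Q$, as $\varepsilon\downarrow0$, $$F(i,Q^* )-F(i,Q\otimes_\varepsilon Q^* )=\big(\Gamma^{Q^*}_i(Q^*_i)-\Gamma^{Q^*}_i(Q_i)\big)\varepsilon+\tfrac12\big(\Lambda^{Q^*}(i,Q^* )-\Lambda^{Q^*}(i,Q)\big)\varepsilon^2+o(\varepsilon^2).$$
   Context: Let $S=\{1,\dots,N\}$, $N\in\mathbb N$. For $i\in S$ let $E_i=\{q\in\mathbb R^N: q_j\ge0\text{ for }j\ne i,\ q_i=-\sum_{j\ne i}q_j\}$ and $D_i\subseteq E_i$ given; $\mathcal Q=\{Q\in\mathbb R^{N\times N}: Q_i\in D_i\ \forall i\}$, $Q_i$ the $i$-th row. For $Q\in\mathcal Q$, $X$ is a time-homogeneous continuous-time Markov chain on $S$ with generator $Q$, $\mathbb E_{i,Q}$ the expectation given $X_0=i$. A payoff function $f$ assigns $f(t,i,\mathbf q)\in\mathbb R$ to $t\ge0,i\in S,\mathbf q\in D_i$. Condition (I) for a function $g$ of $(t,i,\mathbf q)$: $\int_0^\infty\sup_{i\in S,\mathbf q\in D_i,\|\mathbf q\|\le c}|g(t,i,\mathbf q)|dt<\infty$ for all $c>0$. Condition (R): there is a function $r(t,\varepsilon;i,\mathbf q)$, continuous in $\varepsilon$, with $|f(t+\varepsilon,i,\mathbf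 q)-f(t,i,\mathbf q)-\varepsilon f_t(t,i,\mathbf q)|\le r(t,\varepsilon;i,\mathbf q)$ for all $t\ge0,\varepsilon>0,i,\mathbf q$, such that $\int_0^\infty r(t,\varepsilon;i,\mathbf q)dt<\infty$ for all sufficiently small $\varepsilon>0$ and $\varepsilon\mapsto r(t,\varepsilon;i,\mathbf q)/\varepsilon$ is nondecreasing for every $(t,i,\mathbf q)$. Define $F(i,Q)=\mathbb E_{i,Q}[\int_0^\infty f(t,X_t,Q_{X_t})dt]$, $G(i,Q)=\mathbb E_{i,Q}[\int_0^\infty f_t(t,X_t,Q_{X_t})dt]$, $F(Q)=(F(1,Q),\dots,F(N,Q))$, $G(Q)=(G(1,Q),\dots,G(N,Q))$. $Q\otimes_\varepsilon Q'$: $X$ evolves with generator $Q$ on $[0,\varepsilon]$ and $Q'$ on $(\varepsilon,\infty)$; $F(i,Q\otimes_\varepsilon Q')$ is the corresponding expected payoff $\mathbb E_i[\int_0^\varepsilon f(t,X_t,Q_{X_t})dt+\int_\varepsilon^\infty f(t,X_t,Q'_{X_t})dt]$. For $Q^*\in\mathcal Q$: $\Gamma^{Q^*}_i(\mathbf q)=f(0,i,\mathbf q)+\mathbf q\cdot F(Q^* )$ for $\mathbf q\in D_i$; $\Gamma^{Q^*}(Q)=(\Gamma^{Q^*}_1(Q_1),\dots,\Gamma^{Q^*}_N(Q_N))$; $\Lambda^{Q^*}(i,Q)=f_t(0,i,Q_i)+Q_i\cdot\big(2G(Q^* )+\Gamma^{Q^*}(Q)\big)$. *)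

From Stdlib Require Import Reals Lra List ClassicalEpsilon.
Import ListNotations.
Open Scope R_scope.

(* States are 0..N-1 (S = {1..N} shifted); vectors are nat -> R, matrices nat -> nat -> R. *)
Definition sumN (N : nat) (g : nat -> R) : R := fold_right Rplus 0 (map g (seq 0 N)).
Definition dot (N : nat) (u v : nat -> R) : R := sumN N (fun j => u j * v j).
(* l1 norm on R^N (any norm gives the same condition (I)) *)
Definition normN (N : nat) (q : nat -> R) : R := sumN N (fun j => Rabs (q j)).

(* E_i : row of a conservative generator (coordinates >= N are zero) *)
Definition inE (N i : nat) (q : nat -> R) : Prop :=
  (forall j, (j < N)%nat -> j <> i -> 0 <= q j) /\
  q i = - sumN N (fun j => if Nat.eqb j i then 0 else q j) /\
  (forall j, (N <= j)%nat -> q j = 0).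

Definition inQ (N : nat) (D : nat -> (nat -> R) -> Prop) (Q : nat -> nat -> R) : Prop :=
  forall i, (i < N)%nat -> D i (Q i).

(* Transition function of the continuous-time Markov chain with generator Q:
   P(0) = I and the Kolmogorov backward equation P'(t) = Q P(t)
   (its unique solution is exp(tQ)); P t i j = P_i(X_t = j). *)
Definition is_trans (N : nat) (Q : nat -> nat -> R) (P : R -> nat -> nat -> R) : Prop :=
  (forall i j, (i < N)%nat -> (j < N)%nat -> P 0 i j = if Nat.eqb i j then 1 else 0) /\
  (forall i j t, (i < N)%nat -> (j < N)%nat ->
     derivable_pt_lim (fun s => P s i j) t (sumN N (fun k => Q i k * P t k j))).

Definition trans (N : nat) (Q : nat -> nat -> R) : R -> nat -> nat -> R :=
  epsilon (inhabits (fun _ _ _ => 0)) (is_trans N Q).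

Definition int0inf (h : R -> R) : R :=
  epsilon (inhabits 0) (fun l => forall eta, 0 < eta -> exists B, forall b, B <= b ->
     exists pr : Riemann_integrable h 0 b, Rabs (RiemannInt pr - l) < eta).

(* Lebesgue outer measure of A is <= m (covers by open intervals) *)
Definition outer_le (A : R -> Prop) (m : R) : Prop :=
  forall eta, 0 < eta -> exists a b : nat -> R,
    (forall n, a n <= b n) /\
    (forall x, A x -> exists n, a n < x < b n) /\
    (forall K, sum_f_R0 (fun n => b n - a n) K <= m + eta).

(* For a nonnegative function h on [0,oo), given through its strict
   superlevel relation  Sup t y  <->  h t > y,  "int_0^oo h dt < oo"
   via the layer-cake formula  int h = int_0^oo |{t >= 0 : h t > y}| dy
   (the y-integrand is nonincreasing, so its integral is the supremum of
   its right-endpoint Riemann sums). *)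
Definition finite_integral (Sup : R -> R -> Prop) : Prop :=
  exists M, forall delta, 0 < delta -> forall n : nat,
    exists ms : nat -> R,
      (forall k, (k < n)%nat ->
         outer_le (fun t => 0 <= t /\ Sup t (INR (S k) * delta)) (ms k)) /\
      delta * sumN n ms <= M.

Definition condI (N : nat) (D : nat -> (nat -> R) -> Prop)
  (g : R -> nat -> (nat -> R) -> R) : Prop :=
  forall c, 0 < c -> finite_integral (fun t y =>
     exists i q, (i < N)%nat /\ D i q /\ normN N q <= c /\ y < Rabs (g t i q)).

Definition C1_nonneg (g g' : R -> R) : Prop :=
  (forall t, 0 <= t -> forall eta, 0 < eta -> exists delta, 0 < delta /\
     forall h, h <> 0 -> Rabs h < delta -> 0 <= t + h ->
       Rabs ((g (t + h) - g t) / h - g' t) < eta) /\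
  (forall t, 0 <= t -> forall eta, 0 < eta -> exists delta, 0 < delta /\
     forall s, 0 <= s -> Rabs (s - t) < delta -> Rabs (g' s - g' t) < eta).

Definition condR (N : nat) (D : nat -> (nat -> R) -> Prop)
  (f ft : R -> nat -> (nat -> R) -> R) : Prop :=
  exists r : R -> R -> nat -> (nat -> R) -> R,
    (forall t i q e, 0 <= t -> (i < N)%nat -> D i q -> 0 < e ->
       continuity_pt (fun e' => r t e' i q) e) /\
    (forall t i q e, 0 <= t -> (i < N)%nat -> D i q -> 0 < e ->
       Rabs (f (t + e) i q - f t i q - e * ft t i q) <= r t e i q) /\
    (forall i q, (i < N)%nat -> D i q -> exists e0, 0 < e0 /\
       forall e, 0 < e < e0 -> finite_integral (fun t y => y < r t e i q)) /\
    (forall t i q e1 e2, 0 <= t -> (i < N)%nat -> D i q -> 0 < e1 <= e2 ->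
       r t e1 i q / e1 <= r t e2 i q / e2).

(* F(i,Q), G(i,Q): E_i int_0^oo f(t,X_t,Q_{X_t}) dt, computed via P_i(X_t = j) *)
Definition Fval (N : nat) (f : R -> nat -> (nat -> R) -> R) (Q : nat -> nat -> R) (i : nat) : R :=
  int0inf (fun t => sumN N (fun j => trans N Q t i j * f t j (Q j))).

(* F(i, Q (x)_eps Q'): generator Q on [0,eps], Q' afterwards (Markov property) *)
Definition Fconcat (N : nat) (f : R -> nat -> (nat -> R) -> R)
  (Q Q' : nat -> nat -> R) (eps : R) (i : nat) : R :=
  int0inf (fun t =>
    if Rle_dec t eps then sumN N (fun j => trans N Q t i j * f t j (Q j))
    else sumN N (fun j =>
           sumN N (fun k => trans N Q eps i k * trans N Q' (t - eps) k j) * f t j (Q' j))).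

Definition Gam (N : nat) (f : R -> nat -> (nat -> R) -> R) (Qs : nat -> nat -> R)
  (i : nat) (q : nat -> R) : R :=
  f 0 i q + dot N q (fun j => Fval N f Qs j).

(* Lambda^{Qs}(i,Q); G(Qs) = Fval with f_t *)
Definition Lam (N : nat) (f ft : R -> nat -> (nat -> R) -> R) (Qs : nat -> nat -> R)
  (i : nat) (Q : nat -> nat -> R) : R :=
  ft 0 i (Q i) + dot N (Q i) (fun j => 2 * Fval N ft Qs j + Gam N f Qs j (Q j)).

(* Write Qs for Q^*, P_K t = exp (t K) for the transition matrices of a generator K and F for F(Qs).
   By the Markov property at time e and the semigroup identity P_Qs (t - e) = P_Qs (- e) P_Qs t,
     F(i, Q (x)_e Qs) = int_0^e E^Q_i f + sum_m W_im(e) (F_m - int_0^e E^Qs_m f),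
     W(e) = exp (e Q) exp (- e Qs) = I + e (Q - Qs) + e^2/2 (Q^2 - 2 Q Qs + Qs^2) + o(e^2),
   and each integral over [0, e] is expanded through the first-order Taylor expansion of its integrand
   at t = 0. Differentiating t |-> E_k f(t, X_t) and integrating over [0, oo) gives
   G(Qs) = - f(0, ., Qs) - Qs F, which turns the coefficient of e^2 into (Lambda(Qs) - Lambda(Q)) / 2.
   Transition functions are identified with exp (t K) by uniqueness for linear ODEs, and condition (I)
   makes all integrands integrable on [0, oo) through a layer-cake estimate. *)

From Stdlib Require Import Reals Lra Lia List ClassicalEpsilon.
From Coquelicot Require Import Coquelicot.
Open Scope R_scope.

Definition kron (i j : nat) : R := if Nat.eqb i j then 1 else 0.

Lemma sumN_S n g : sumN (S n) g = sumN n g + g n.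
Proof.
  unfold sumN. rewrite seq_S, map_app, fold_right_app. simpl.
  induction (map g (seq 0 n)) as [|a l IH]; simpl; lra.
Qed.

Lemma sumN_ext n g h : (forall k, (k < n)%nat -> g k = h k) -> sumN n g = sumN n h.
Proof.
  induction n as [|n IH]; intros H; [reflexivity|].
  rewrite !sumN_S. f_equal; [apply IH; intros; apply H|apply H]; lia.
Qed.

Lemma sumN_plus n g h : sumN n (fun k => g k + h k) = sumN n g + sumN n h.
Proof. induction n as [|n IH]; [unfold sumN; simpl; lra|]. rewrite !sumN_S, IH. lra. Qed.

Lemma sumN_minus n g h : sumN n (fun k => g k - h k) = sumN n g - sumN n h.
Proof. induction n as [|n IH]; [unfold sumN; simpl; lra|]. rewrite !sumN_S, IH. lra. Qed.

Lemma sumN_scal_l n c g : sumN n (fun k => c * g k) = c * sumN n g.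
Proof. induction n as [|n IH]; [unfold sumN; simpl; lra|]. rewrite !sumN_S, IH. lra. Qed.

Lemma sumN_scal_r n c g : sumN n (fun k => g k * c) = sumN n g * c.
Proof. induction n as [|n IH]; [unfold sumN; simpl; lra|]. rewrite !sumN_S, IH. lra. Qed.

Lemma sumN_const n c : sumN n (fun _ => c) = INR n * c.
Proof.
  induction n as [|n IH]; [unfold sumN; simpl; lra|].
  rewrite sumN_S, IH, S_INR. lra.
Qed.

Lemma sumN_comm n m (x : nat -> nat -> R) :
  sumN n (fun a => sumN m (fun b => x a b)) = sumN m (fun b => sumN n (fun a => x a b)).
Proof.
  induction n as [|n IH].
  - symmetry. transitivity (sumN m (fun _ => 0)); [reflexivity|].
    rewrite sumN_const. unfold sumN. simpl. ring.
  - rewrite sumN_S, IH, <- sumN_plus. apply sumN_ext. intros. now rewrite sumN_S.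
Qed.

Lemma sumN_mat_vec n (x : nat -> R) (Y : nat -> nat -> R) (F : nat -> R) :
  sumN n (fun m => sumN n (fun l => x l * Y l m) * F m) = sumN n (fun l => x l * sumN n (fun m => Y l m * F m)).
Proof.
  rewrite (sumN_ext n _ (fun m => sumN n (fun l => x l * (Y l m * F m))))
    by (intros; rewrite <- sumN_scal_r; apply sumN_ext; intros; ring).
  rewrite sumN_comm. apply sumN_ext. intros. now rewrite sumN_scal_l.
Qed.

Lemma sumN_le n g h : (forall k, (k < n)%nat -> g k <= h k) -> sumN n g <= sumN n h.
Proof.
  induction n as [|n IH]; intros H; [unfold sumN; simpl; lra|]. rewrite !sumN_S.
  apply Rplus_le_compat; [apply IH; intros; apply H|apply H]; lia.
Qed.

Lemma sumN_nonneg n g : (forall k, (k < n)%nat -> 0 <= g k) -> 0 <= sumN n g.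
Proof.
  intros H. replace 0 with (sumN n (fun _ => 0)) by (rewrite sumN_const; ring).
  now apply sumN_le.
Qed.

Lemma Rabs_sumN_le n g : Rabs (sumN n g) <= sumN n (fun k => Rabs (g k)).
Proof.
  induction n as [|n IH]; [unfold sumN; simpl; rewrite Rabs_R0; lra|]. rewrite !sumN_S.
  eapply Rle_trans; [apply Rabs_triang|]. lra.
Qed.

Lemma term_le_sumN n g k : (forall j, (j < n)%nat -> 0 <= g j) -> (k < n)%nat -> g k <= sumN n g.
Proof.
  induction n as [|n IH]; intros H Hk; [lia|]. rewrite sumN_S.
  destruct (Nat.eq_dec k n) as [->|Hne].
  - assert (0 <= sumN n g) by (apply sumN_nonneg; intros; apply H; lia). lra.
  - assert (g k <= sumN n g) by (apply IH; [intros; apply H|]; lia).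
    assert (0 <= g n) by (apply H; lia). lra.
Qed.

Lemma sumN_kron_l n i x : (i < n)%nat -> sumN n (fun k => kron i k * x k) = x i.
Proof.
  induction n as [|n IH]; intros Hi; [lia|]. rewrite sumN_S.
  destruct (Nat.eq_dec i n) as [->|Hne].
  - rewrite (sumN_ext n _ (fun _ => 0)), sumN_const.
    + unfold kron. rewrite Nat.eqb_refl. ring.
    + intros k Hk. unfold kron. destruct (Nat.eqb_spec n k); [lia|ring].
  - rewrite IH by lia. unfold kron. destruct (Nat.eqb_spec i n); [lia|ring].
Qed.

Lemma sumN_kron_r n i x : (i < n)%nat -> sumN n (fun k => x k * kron k i) = x i.
Proof.
  intros Hi. rewrite <- (sumN_kron_l n i x Hi). apply sumN_ext. intros k _.
  unfold kron. rewrite Nat.eqb_sym. ring.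
Qed.

Lemma sumN_S_sum_f_R0 n g : sumN (S n) g = sum_f_R0 g n.
Proof. induction n as [|n IH]; rewrite sumN_S; [unfold sumN; simpl; ring|]. rewrite IH. reflexivity. Qed.

(* Coquelicot states these rules on abstract normed modules; their instances on [R] let [apply]
   match goals written with [Rplus] and [Rmult]. *)

Lemma is_derive_Rext (f g : R -> R) (x l l' : R) :
  (forall t, f t = g t) -> l = l' -> is_derive f x l -> is_derive g x l'.
Proof. intros H ->. now apply is_derive_ext. Qed.

Lemma is_derive_Rplus (f g : R -> R) (x df dg : R) :
  is_derive f x df -> is_derive g x dg -> is_derive (fun t => f t + g t) x (df + dg).
Proof. intros. now apply (is_derive_plus f g x df dg). Qed.

Lemma is_derive_Rminus (f g : R -> R) (x df dg : R) :
  is_derive f x df -> is_derive g x dg -> is_derive (fun t => f t - g t) x (df - dg).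
Proof. intros. now apply (is_derive_minus f g x df dg). Qed.

Lemma is_derive_Rmult (f g : R -> R) (x df dg : R) :
  is_derive f x df -> is_derive g x dg -> is_derive (fun t => f t * g t) x (df * g x + f x * dg).
Proof. intros. apply (is_derive_mult f g x df dg); auto. intros; apply Rmult_comm. Qed.

Lemma is_derive_Rscal (f : R -> R) (x c df : R) :
  is_derive f x df -> is_derive (fun t => c * f t) x (c * df).
Proof. apply is_derive_scal. Qed.

Lemma is_derive_Rconst (c x : R) : is_derive (fun _ => c) x 0.
Proof. apply (is_derive_const c x). Qed.

Lemma is_derive_Rlin (c x : R) : is_derive (fun t => c * t) x c.
Proof.
  apply (is_derive_Rext (fun t => c * t) _ x (c * 1)); [reflexivity|ring|].
  apply is_derive_Rscal, (is_derive_id (K := R_AbsRing)).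
Qed.

Lemma is_derive_Rneg (x : R) : is_derive (fun t => - t) x (-1).
Proof. apply (is_derive_Rext (fun t => -1 * t) _ x (-1)); [intros; ring|reflexivity|apply is_derive_Rlin]. Qed.

Lemma is_derive_Rcomp (f g : R -> R) (x df dg : R) :
  is_derive f (g x) df -> is_derive g x dg -> is_derive (fun t => f (g t)) x (dg * df).
Proof. intros. now apply (is_derive_comp f g x df dg). Qed.

Lemma is_derive_sumN n (F dF : nat -> R -> R) (x : R) :
  (forall k, (k < n)%nat -> is_derive (F k) x (dF k x)) ->
  is_derive (fun t => sumN n (fun k => F k t)) x (sumN n (fun k => dF k x)).
Proof.
  induction n as [|n IH]; intros H.
  - apply (is_derive_Rconst 0).
  - eapply is_derive_Rext; [intros; symmetry; apply sumN_S|symmetry; apply sumN_S|].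
    apply is_derive_Rplus; [apply IH; intros|]; apply H; lia.
Qed.

Lemma continuous_of_is_derive (f : R -> R) (x l : R) : is_derive f x l -> continuous f x.
Proof.
  intros H. apply (ex_derive_continuous (K := R_AbsRing) (V := R_NormedModule)).
  now exists l.
Qed.

Lemma continuous_Rext (f g : R -> R) (x : R) :
  (forall t, f t = g t) -> continuous f x -> continuous g x.
Proof. apply continuous_ext. Qed.

Lemma continuous_Rplus (f g : R -> R) (x : R) :
  continuous f x -> continuous g x -> continuous (fun t => f t + g t) x.
Proof. intros. now apply (continuous_plus f g). Qed.

Lemma continuous_Rminus (f g : R -> R) (x : R) :
  continuous f x -> continuous g x -> continuous (fun t => f t - g t) x.
Proof. intros. now apply (continuous_minus f g). Qed.

Lemma continuous_Rmult (f g : R -> R) (x : R) :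
  continuous f x -> continuous g x -> continuous (fun t => f t * g t) x.
Proof. intros. now apply (continuous_mult f g). Qed.

Lemma continuous_Rabs_comp (f : R -> R) (x : R) : continuous f x -> continuous (fun t => Rabs (f t)) x.
Proof. intros. apply (continuous_comp f Rabs); auto. apply continuous_Rabs. Qed.

Lemma continuous_sumN n (F : nat -> R -> R) (x : R) :
  (forall k, (k < n)%nat -> continuous (F k) x) -> continuous (fun t => sumN n (fun k => F k t)) x.
Proof.
  induction n as [|n IH]; intros H.
  - apply continuous_const.
  - eapply continuous_ext; [intros; symmetry; apply sumN_S|].
    apply continuous_Rplus; [apply IH; intros|]; apply H; lia.
Qed.

Lemma continuous_of_eps_delta (f : R -> R) x :
  (forall eta, 0 < eta -> exists delta, 0 < delta /\
     forall y, Rabs (y - x) < delta -> Rabs (f y - f x) < eta) -> continuous f x.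
Proof.
  intros H. apply continuity_pt_filterlim. intros eps Heps. destruct (H eps Heps) as [d [Hd Hy]].
  exists d. split; auto. intros y [_ Hyd]. now apply Hy.
Qed.

Lemma eps_delta_of_continuous (f : R -> R) x : continuous f x ->
  forall eta, 0 < eta -> exists delta, 0 < delta /\
    forall y, Rabs (y - x) < delta -> Rabs (f y - f x) < eta.
Proof.
  intros H eta Heta. apply continuity_pt_filterlim in H. destruct (H eta Heta) as [d [Hd Hy]].
  exists d. split; auto. intros y Hyd. destruct (Req_dec y x) as [->|Hne].
  - rewrite Rminus_diag, Rabs_R0. auto.
  - apply Hy. split; [split; [exact I|auto]|exact Hyd].
Qed.

Lemma RInt_Rplus (f g : R -> R) (a b : R) :
  ex_RInt f a b -> ex_RInt g a b -> RInt (fun t => f t + g t) a b = RInt f a b + RInt g a b.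
Proof. intros. now apply (RInt_plus f g). Qed.

Lemma RInt_Rminus (f g : R -> R) (a b : R) :
  ex_RInt f a b -> ex_RInt g a b -> RInt (fun t => f t - g t) a b = RInt f a b - RInt g a b.
Proof. intros. now apply (RInt_minus f g). Qed.

Lemma RInt_Rscal (f : R -> R) (a b c : R) : ex_RInt f a b -> RInt (fun t => c * f t) a b = c * RInt f a b.
Proof. intros. now apply (RInt_scal f). Qed.

Lemma RInt_Rconst (a b c : R) : RInt (fun _ => c) a b = (b - a) * c.
Proof. exact (RInt_const (V := R_CompleteNormedModule) a b c). Qed.

Lemma RInt_RChasles (f : R -> R) (a b c : R) :
  ex_RInt f a b -> ex_RInt f b c -> RInt f a b + RInt f b c = RInt f a c.
Proof. intros. now apply (RInt_Chasles f). Qed.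

Lemma ex_RInt_Rcontinuous (f : R -> R) (a b : R) : (forall x, continuous f x) -> ex_RInt f a b.
Proof. intros H. apply (ex_RInt_continuous (V := R_CompleteNormedModule)). intros; apply H. Qed.

Lemma ex_RInt_sumN n (F : nat -> R -> R) (a b : R) :
  (forall k, (k < n)%nat -> ex_RInt (F k) a b) -> ex_RInt (fun t => sumN n (fun k => F k t)) a b.
Proof.
  induction n as [|n IH]; intros H.
  - apply (ex_RInt_ext (fun _ => 0)); [reflexivity|apply ex_RInt_const].
  - eapply ex_RInt_ext; [intros; symmetry; apply sumN_S|].
    apply (ex_RInt_plus (V := R_CompleteNormedModule)); [apply IH; intros|]; apply H; lia.
Qed.

Lemma RInt_sumN n (F : nat -> R -> R) (a b : R) :
  (forall k, (k < n)%nat -> ex_RInt (F k) a b) ->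
  RInt (fun t => sumN n (fun k => F k t)) a b = sumN n (fun k => RInt (F k) a b).
Proof.
  induction n as [|n IH]; intros H.
  - rewrite (RInt_ext _ (fun _ => 0)) by reflexivity. rewrite RInt_Rconst. unfold sumN. simpl. ring.
  - rewrite (RInt_ext _ (fun t => sumN n (fun k => F k t) + F n t)) by (intros; apply sumN_S).
    assert (Hn : ex_RInt (fun t => sumN n (fun k => F k t)) a b)
      by (apply ex_RInt_sumN; intros; apply H; lia).
    rewrite RInt_Rplus, IH, sumN_S by (exact Hn || (intros; apply H; lia)). reflexivity.
Qed.

Lemma RInt_Rle (f g : R -> R) (a b : R) : a <= b -> ex_RInt f a b -> ex_RInt g a b ->
  (forall x, a <= x <= b -> f x <= g x) -> RInt f a b <= RInt g a b.
Proof. intros. apply RInt_le; auto. intros; apply H2; lra. Qed.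

Lemma RInt_Rnonneg (f : R -> R) (a b : R) :
  a <= b -> ex_RInt f a b -> (forall x, a <= x <= b -> 0 <= f x) -> 0 <= RInt f a b.
Proof.
  intros. replace 0 with (RInt (fun _ => 0) a b) by (rewrite RInt_Rconst; apply Rmult_0_r).
  apply RInt_Rle; auto. apply ex_RInt_const.
Qed.

(** * Uniqueness for linear ODEs *)

Lemma le_of_is_derive_nonpos (v dv : R -> R) t : 0 <= t ->
  (forall s, is_derive v s (dv s)) -> (forall s, 0 <= s <= t -> dv s <= 0) -> v t <= v 0.
Proof.
  intros Ht Hd Hneg.
  destruct (MVT_gen v 0 t dv) as [c [Hc Heq]].
  - intros; apply Hd.
  - intros. apply continuity_pt_filterlim. eapply continuous_of_is_derive. apply Hd.
  - rewrite Rmin_left in Hc by lra. rewrite Rmax_right in Hc by lra.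
    assert (dv c <= 0) by (apply Hneg; lra). nra.
Qed.

Lemma gronwall_zero (u du : R -> R) c :
  (forall s, is_derive u s (du s)) -> (forall s, du s <= c * u s) -> u 0 = 0 ->
  forall t, 0 <= t -> u t <= 0.
Proof.
  intros Hd Hle H0 t Ht.
  set (w := fun s => exp (- c * s)).
  assert (Hw : forall s, is_derive w s (- c * w s)).
  { intros s. apply (is_derive_Rext (fun s => exp (- c * s)) w s (- c * exp (- c * s))); try reflexivity.
    apply (is_derive_Rcomp exp (fun s => - c * s)); [apply is_derive_exp|apply is_derive_Rlin]. }
  assert (Hv : u t * w t <= u 0 * w 0).
  { apply (le_of_is_derive_nonpos (fun s => u s * w s) (fun s => du s * w s + u s * (- c * w s))); auto.
    - intros s. now apply is_derive_Rmult.
    - intros s _. pose proof (Hle s). assert (0 < w s) by apply exp_pos. nra. }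
  rewrite H0 in Hv. assert (0 < w t) by apply exp_pos. nra.
Qed.

Lemma quad_form_le N (K : nat -> nat -> R) (x : nat -> R) :
  sumN N (fun k => sumN N (fun m => K k m * x m) * x k)
  <= sumN N (fun a => sumN N (fun b => Rabs (K a b))) * sumN N (fun k => x k * x k).
Proof.
  set (u := sumN N (fun k => x k * x k)).
  assert (Hsq : forall k, (k < N)%nat -> x k * x k <= u).
  { intros k Hk. apply (term_le_sumN N (fun k => x k * x k)); auto. intros; nra. }
  rewrite <- sumN_scal_r. apply sumN_le. intros a Ha.
  rewrite <- !sumN_scal_r. apply sumN_le. intros b Hb.
  assert (Hab : Rabs (x b * x a) <= u).
  { pose proof (Hsq a Ha). pose proof (Hsq b Hb).
    rewrite Rabs_mult. pose proof (Rabs_pos (x a)). pose proof (Rabs_pos (x b)).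
    rewrite <- (Rabs_pos_eq (x a * x a)), Rabs_mult in H by nra.
    rewrite <- (Rabs_pos_eq (x b * x b)), Rabs_mult in H0 by nra. nra. }
  rewrite Rmult_assoc. eapply Rle_trans; [apply Rle_abs|]. rewrite Rabs_mult.
  apply Rmult_le_compat_l; [apply Rabs_pos|exact Hab].
Qed.

Definition solves_linear_ode N (K : nat -> nat -> R) (x : R -> nat -> R) : Prop :=
  forall k t, (k < N)%nat -> is_derive (fun s => x s k) t (sumN N (fun m => K k m * x t m)).

Lemma linear_ode_zero_fwd N K x : solves_linear_ode N K x ->
  (forall k, (k < N)%nat -> x 0 k = 0) -> forall t k, 0 <= t -> (k < N)%nat -> x t k = 0.
Proof.
  intros Hd H0 t k Ht Hk.
  set (u := fun s => sumN N (fun k => x s k * x s k)).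
  set (L := sumN N (fun a => sumN N (fun b => Rabs (K a b)))).
  assert (Hu : forall s, is_derive u s (2 * sumN N (fun k => sumN N (fun m => K k m * x s m) * x s k))).
  { intros s. rewrite <- sumN_scal_l.
    apply (is_derive_sumN N (fun k s => x s k * x s k)
             (fun k s => 2 * (sumN N (fun m => K k m * x s m) * x s k))).
    intros j Hj. eapply is_derive_Rext; [reflexivity| |apply is_derive_Rmult; apply Hd; auto]. cbv beta. ring. }
  assert (Hut : u t <= 0).
  { apply (gronwall_zero u _ (2 * L) Hu); auto.
    - intros s. pose proof (quad_form_le N K (x s)). fold L in H. unfold u. lra.
    - unfold u. rewrite (sumN_ext N _ (fun _ => 0)), sumN_const; [ring|].
      intros j Hj. rewrite H0; auto; ring. }
  assert (x t k * x t k <= u t) by (apply (term_le_sumN N (fun k => x t k * x t k)); auto; intros; nra).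
  nra.
Qed.

Lemma linear_ode_unique N K x y : solves_linear_ode N K x -> solves_linear_ode N K y ->
  (forall k, (k < N)%nat -> x 0 k = y 0 k) -> forall t k, (k < N)%nat -> x t k = y t k.
Proof.
  intros Hx Hy H0 t k Hk.
  assert (Hz : solves_linear_ode N K (fun s k => x s k - y s k)).
  { intros j s Hj. eapply is_derive_Rext; [reflexivity| |apply is_derive_Rminus; [apply Hx|apply Hy]; auto].
    rewrite <- sumN_minus. apply sumN_ext. intros; ring. }
  cut (x t k - y t k = 0); [lra|].
  destruct (Rle_dec 0 t) as [Ht|Ht].
  - apply (linear_ode_zero_fwd N K (fun s k => x s k - y s k)); auto.
    intros j Hj. rewrite H0; auto; ring.
  - replace t with (- (- t)) by ring.
    apply (linear_ode_zero_fwd N (fun a b => - K a b) (fun s k => x (- s) k - y (- s) k)); try lra; auto.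
    + intros j s Hj.
      apply (is_derive_Rext (fun s => (fun s => x s j - y s j) (- s)) _ s
               (-1 * sumN N (fun m => K j m * (x (- s) m - y (- s) m)))); [reflexivity| |].
      * rewrite <- sumN_scal_l. apply sumN_ext. intros; ring.
      * apply (is_derive_Rcomp (fun s => x s j - y s j) (fun s => - s)); [apply Hz; auto|apply is_derive_Rneg].
    + intros j Hj. rewrite Ropp_0, H0; auto; ring.
Qed.

(** * The transition function *)

Definition generator N (Q : nat -> nat -> R) : Prop :=
  (forall i j, (i < N)%nat -> (j < N)%nat -> i <> j -> 0 <= Q i j) /\
  (forall i, (i < N)%nat -> sumN N (fun j => Q i j) = 0).

Lemma generator_of_inQ N D Q :
  (forall i q, (i < N)%nat -> D i q -> inE N i q) -> inQ N D Q -> generator N Q.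
Proof.
  intros HD HQ. split.
  - intros i j Hi Hj Hne. now apply (proj1 (HD i (Q i) Hi (HQ i Hi))).
  - intros i Hi. destruct (HD i (Q i) Hi (HQ i Hi)) as [_ [Hdiag _]].
    rewrite (sumN_ext N _ (fun j => Q i j * kron j i + (if Nat.eqb j i then 0 else Q i j))).
    + rewrite sumN_plus, sumN_kron_r by exact Hi. lra.
    + intros j _. unfold kron. destruct (Nat.eqb j i); ring.
Qed.

Fixpoint mat_pow N (A : nat -> nat -> R) (n : nat) : nat -> nat -> R :=
  match n with
  | O => kron
  | S n => fun i j => sumN N (fun k => A i k * mat_pow N A n k j)
  end.

Definition exp_coef N A i j (n : nat) : R := mat_pow N A n i j / INR (Factorial.fact n).

Lemma Rabs_mat_pow_le N A c :
  (forall a, (a < N)%nat -> sumN N (fun b => Rabs (A a b)) <= c) -> 1 <= c ->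
  forall n i j, (i < N)%nat -> Rabs (mat_pow N A n i j) <= c ^ n.
Proof.
  intros HA Hc n. induction n as [|n IH]; intros i j Hi; simpl.
  - unfold kron. destruct (Nat.eqb i j); rewrite ?Rabs_R1, ?Rabs_R0; lra.
  - eapply Rle_trans; [apply Rabs_sumN_le|].
    apply Rle_trans with (sumN N (fun k => Rabs (A i k) * c ^ n)).
    + apply sumN_le. intros k Hk. rewrite Rabs_mult.
      apply Rmult_le_compat_l; [apply Rabs_pos|auto].
    + rewrite sumN_scal_r. apply Rmult_le_compat_r; [apply pow_le; lra|auto].
Qed.

Lemma mat_pow_nonneg N A : (forall a b, (a < N)%nat -> (b < N)%nat -> 0 <= A a b) ->
  forall n a b, (a < N)%nat -> (b < N)%nat -> 0 <= mat_pow N A n a b.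
Proof.
  intros HA n. induction n as [|n IH]; intros a b Ha Hb; simpl.
  - unfold kron. destruct (Nat.eqb a b); lra.
  - apply sumN_nonneg. intros k Hk. apply Rmult_le_pos; auto.
Qed.

Lemma ex_series_exp_terms (y : R) : ex_series (fun n => y ^ n * / INR (Factorial.fact n)).
Proof.
  exists (exp y). eapply is_series_ext; [|exact (is_exp_Reals y)].
  intros n. simpl. now rewrite pow_n_pow.
Qed.

Lemma CV_radius_exp_bounded (a : nat -> R) c : 0 <= c ->
  (forall n, Rabs (a n) <= c ^ n / INR (Factorial.fact n)) -> forall x, Rbar_lt (Rabs x) (CV_radius a).
Proof.
  intros Hc Ha x.
  assert (Hx : 0 <= Rabs x) by apply Rabs_pos.
  assert (Hd : CV_disk a (Rabs x + 1)).
  { apply (ex_series_le (K := R_AbsRing) (V := R_CompleteNormedModule))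
      with (b := fun n => (c * (Rabs x + 1)) ^ n * / INR (Factorial.fact n));
      [|apply ex_series_exp_terms].
    intros n. change (norm (Rabs (a n * (Rabs x + 1) ^ n))) with (Rabs (Rabs (a n * (Rabs x + 1) ^ n))).
    rewrite Rabs_Rabsolu, Rabs_mult, Rpow_mult_distr, (Rabs_pos_eq ((Rabs x + 1) ^ n))
      by (apply pow_le; lra).
    specialize (Ha n). pose proof (pow_le (Rabs x + 1) n ltac:(lra)).
    unfold Rdiv in Ha. nra. }
  destruct (Lub_Rbar_correct (CV_disk a)) as [Hub _].
  specialize (Hub _ Hd). unfold CV_radius. destruct (Lub_Rbar (CV_disk a)); simpl in *; auto; lra.
Qed.

Lemma PSeries_sumN n (c : nat -> R) (a : nat -> nat -> R) x :
  (forall k, (k < n)%nat -> Rbar_lt (Rabs x) (CV_radius (a k))) ->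
  ex_pseries (fun m => sumN n (fun k => c k * a k m)) x /\
  PSeries (fun m => sumN n (fun k => c k * a k m)) x = sumN n (fun k => c k * PSeries (a k) x).
Proof.
  induction n as [|n IH]; intros H.
  - split.
    + apply CV_radius_inside, (CV_radius_exp_bounded _ 0); [lra|]. intros m.
      unfold sumN. simpl. rewrite Rabs_R0. unfold Rdiv.
      apply Rmult_le_pos; [apply pow_le; lra|apply Rlt_le, Rinv_0_lt_compat, INR_fact_lt_0].
    + unfold sumN. simpl. apply PSeries_const_0.
  - destruct IH as [He Heq]; [intros; apply H; lia|].
    assert (Hn : ex_pseries (a n) x) by (apply CV_radius_inside; apply H; lia).
    assert (He2 : ex_pseries (PS_scal (c n) (a n)) x) by (apply ex_pseries_scal; auto; apply Rmult_comm).
    assert (Hsplit : forall m, sumN (S n) (fun k => c k * a k m)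
                     = PS_plus (fun m => sumN n (fun k => c k * a k m)) (PS_scal (c n) (a n)) m)
      by (intros; apply sumN_S).
    split.
    + eapply ex_series_ext; [|apply (ex_pseries_plus _ _ x He He2)].
      intros m. simpl. now rewrite Hsplit.
    + rewrite (PSeries_ext _ _ _ Hsplit), PSeries_plus, PSeries_scal, Heq, sumN_S by auto.
      reflexivity.
Qed.

Definition abs_mass N (Q : nat -> nat -> R) : R := sumN N (fun a => sumN N (fun b => Rabs (Q a b))).

Definition shifted N Q i k : R := Q i k + kron i k * abs_mass N Q.

(* [exp (t Q) = exp (- c t) exp (t (Q + c I))]: with [c] the total mass of [|Q|] the matrix
   [Q + c I] of a generator is nonnegative, so this form exhibits [exp (t Q) >= 0]. *)
Definition exp_gen N Q t i j : R :=
  exp (- abs_mass N Q * t) * PSeries (exp_coef N (shifted N Q) i j) t.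

Lemma abs_mass_nonneg N Q : 0 <= abs_mass N Q.
Proof. apply sumN_nonneg. intros. apply sumN_nonneg. intros. apply Rabs_pos. Qed.

Lemma row_le_abs_mass N Q a : (a < N)%nat -> sumN N (fun b => Rabs (Q a b)) <= abs_mass N Q.
Proof.
  intros Ha. apply (term_le_sumN N (fun a => sumN N (fun b => Rabs (Q a b)))); auto.
  intros. apply sumN_nonneg. intros. apply Rabs_pos.
Qed.

Lemma CV_radius_exp_gen N Q i j t : (i < N)%nat ->
  Rbar_lt (Rabs t) (CV_radius (exp_coef N (shifted N Q) i j)).
Proof.
  intros Hi. pose proof (abs_mass_nonneg N (shifted N Q)).
  apply (CV_radius_exp_bounded _ (abs_mass N (shifted N Q) + 1)); [lra|].
  intros n. unfold exp_coef, Rdiv. rewrite Rabs_mult.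
  assert (0 < / INR (Factorial.fact n)) by (apply Rinv_0_lt_compat, INR_fact_lt_0).
  rewrite (Rabs_pos_eq (/ _)) by lra. apply Rmult_le_compat_r; [lra|].
  apply Rabs_mat_pow_le; auto; [|lra].
  intros a Ha. pose proof (row_le_abs_mass N (shifted N Q) a Ha). lra.
Qed.

Lemma PS_derive_exp_coef N A i j n :
  PS_derive (exp_coef N A i j) n = sumN N (fun k => A i k * exp_coef N A k j n).
Proof.
  unfold PS_derive, exp_coef. simpl mat_pow. rewrite fact_simpl, mult_INR.
  pose proof (INR_fact_neq_0 n). assert (INR (S n) <> 0) by (apply not_0_INR; lia).
  rewrite (sumN_ext N (fun k => A i k * (mat_pow N A n k j / INR (Factorial.fact n)))
             (fun k => A i k * mat_pow N A n k j * / INR (Factorial.fact n)))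
    by (intros; unfold Rdiv; ring).
  rewrite sumN_scal_r. field. auto.
Qed.

Lemma is_derive_exp_gen N Q i j (t : R) : (i < N)%nat -> (j < N)%nat ->
  is_derive (fun s => exp_gen N Q s i j) t (sumN N (fun k => Q i k * exp_gen N Q t k j)).
Proof.
  intros Hi Hj. set (c := abs_mass N Q). set (A := shifted N Q).
  set (E := exp (- c * t)).
  apply (is_derive_Rext (fun s => exp (- c * s) * PSeries (exp_coef N A i j) s) _ t
           (- c * E * PSeries (exp_coef N A i j) t
            + E * sumN N (fun k => A i k * PSeries (exp_coef N A k j) t))); [reflexivity| |].
  - rewrite (sumN_ext N (fun k => A i k * PSeries (exp_coef N A k j) t)
               (fun k => Q i k * PSeries (exp_coef N A k j) t + kron i k * (c * PSeries (exp_coef N A k j) t)))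
      by (intros; unfold A, shifted; fold c; ring).
    rewrite sumN_plus, sumN_kron_l by exact Hi. unfold exp_gen. fold c A E.
    rewrite (sumN_ext N (fun k => Q i k * (E * PSeries (exp_coef N A k j) t))
               (fun k => E * (Q i k * PSeries (exp_coef N A k j) t))) by (intros; ring).
    rewrite sumN_scal_l. ring.
  - apply is_derive_Rmult.
    + apply (is_derive_Rcomp exp (fun s => - c * s)); [apply is_derive_exp|apply is_derive_Rlin].
    + replace (sumN N (fun k => A i k * PSeries (exp_coef N A k j) t))
        with (PSeries (PS_derive (exp_coef N A i j)) t).
      * apply is_derive_PSeries. now apply CV_radius_exp_gen.
      * rewrite (PSeries_ext _ (fun m => sumN N (fun k => A i k * exp_coef N A k j m)))
          by (intros; apply PS_derive_exp_coef).
        apply PSeries_sumN. intros. now apply CV_radius_exp_gen.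
Qed.

Lemma exp_gen_0 N Q i j : exp_gen N Q 0 i j = kron i j.
Proof.
  unfold exp_gen. rewrite PSeries_0. unfold exp_coef. simpl.
  rewrite Rmult_0_r, exp_0. unfold kron. destruct (Nat.eqb i j); field.
Qed.

Lemma exp_gen_is_trans N Q : is_trans N Q (exp_gen N Q).
Proof.
  split; intros.
  - apply exp_gen_0.
  - apply is_derive_Reals. now apply is_derive_exp_gen.
Qed.

Lemma Series_nonneg (a : nat -> R) : ex_series a -> (forall n, 0 <= a n) -> 0 <= Series a.
Proof.
  intros He Ha. replace 0 with (Series (fun n => 0 * a n)) by (rewrite Series_scal_l; ring).
  apply Series_le; auto. intros n. rewrite Rmult_0_l. split; [lra|auto].
Qed.

Section Transition.

Variables (N : nat) (Q : nat -> nat -> R).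

Lemma trans_is_trans : is_trans N Q (trans N Q).
Proof. unfold trans. apply epsilon_spec. exists (exp_gen N Q). apply exp_gen_is_trans. Qed.

Lemma is_derive_trans i j t : (i < N)%nat -> (j < N)%nat ->
  is_derive (fun s => trans N Q s i j) t (sumN N (fun k => Q i k * trans N Q t k j)).
Proof. intros. apply is_derive_Reals. now apply (proj2 trans_is_trans). Qed.

Lemma trans_0 i j : (i < N)%nat -> (j < N)%nat -> trans N Q 0 i j = kron i j.
Proof. intros. now apply (proj1 trans_is_trans). Qed.

Lemma continuous_trans i j t : (i < N)%nat -> (j < N)%nat -> continuous (fun s => trans N Q s i j) t.
Proof. intros. eapply continuous_of_is_derive. now apply is_derive_trans. Qed.

Lemma trans_solves j : (j < N)%nat -> solves_linear_ode N Q (fun s k => trans N Q s k j).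
Proof. intros Hj k t Hk. now apply is_derive_trans. Qed.

Lemma trans_unique P : is_trans N Q P ->
  forall t i j, (i < N)%nat -> (j < N)%nat -> P t i j = trans N Q t i j.
Proof.
  intros [H0 Hd] t i j Hi Hj.
  apply (linear_ode_unique N Q (fun s k => P s k j) (fun s k => trans N Q s k j)); auto.
  - intros k s Hk. apply is_derive_Reals. now apply Hd.
  - now apply trans_solves.
  - intros k Hk. now rewrite H0, trans_0.
Qed.

Lemma trans_add s t i j : (i < N)%nat -> (j < N)%nat ->
  trans N Q (t + s) i j = sumN N (fun m => trans N Q t i m * trans N Q s m j).
Proof.
  intros Hi Hj.
  apply (linear_ode_unique N Q (fun t k => trans N Q (t + s) k j)
           (fun t k => sumN N (fun m => trans N Q t k m * trans N Q s m j))); auto.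
  - intros k r Hk.
    apply (is_derive_Rext (fun r => trans N Q (r + s) k j) _ r
             (1 * sumN N (fun l => Q k l * trans N Q (r + s) l j))); [reflexivity|ring|].
    apply (is_derive_Rcomp (fun x => trans N Q x k j) (fun r => r + s)); [now apply is_derive_trans|].
    apply (is_derive_Rext (fun r => r + s) _ r (1 + 0)); [reflexivity|ring|].
    apply is_derive_Rplus; [apply (is_derive_id (K := R_AbsRing))|apply is_derive_Rconst].
  - intros k r Hk.
    apply (is_derive_Rext (fun r => sumN N (fun m => trans N Q r k m * trans N Q s m j)) _ r
             (sumN N (fun m => sumN N (fun l => Q k l * trans N Q r l m) * trans N Q s m j)));
      [reflexivity| |].
    + rewrite (sumN_ext N _ (fun m => sumN N (fun l => Q k l * (trans N Q r l m * trans N Q s m j))))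
        by (intros; rewrite <- sumN_scal_r; apply sumN_ext; intros; ring).
      rewrite sumN_comm. apply sumN_ext. intros. apply sumN_scal_l.
    + apply (is_derive_sumN N (fun m r => trans N Q r k m * trans N Q s m j)
               (fun m r => sumN N (fun l => Q k l * trans N Q r l m) * trans N Q s m j)).
      intros m Hm. apply (is_derive_Rext (fun r => trans N Q r k m * trans N Q s m j) _ r (sumN N (fun l => Q k l * trans N Q r l m) * trans N Q s m j
                                                 + trans N Q r k m * 0)); [reflexivity|ring|].
      apply is_derive_Rmult; [now apply is_derive_trans|apply is_derive_Rconst].
  - intros k Hk. rewrite Rplus_0_l.
    rewrite (sumN_ext N _ (fun m => kron k m * trans N Q s m j)) by (intros; now rewrite trans_0).
    now rewrite sumN_kron_l.
Qed.

Hypothesis HQ : generator N Q.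

Lemma trans_nonneg t i j : 0 <= t -> (i < N)%nat -> (j < N)%nat -> 0 <= trans N Q t i j.
Proof.
  intros Ht Hi Hj. rewrite <- (trans_unique _ (exp_gen_is_trans N Q)) by auto. unfold exp_gen.
  apply Rmult_le_pos; [apply Rlt_le, exp_pos|].
  assert (HA : forall a b, (a < N)%nat -> (b < N)%nat -> 0 <= shifted N Q a b).
  { intros a b Ha Hb. unfold shifted, kron. destruct (Nat.eqb_spec a b) as [<-|Hne].
    - assert (Rabs (Q a a) <= abs_mass N Q).
      { eapply Rle_trans; [|apply (row_le_abs_mass N Q a Ha)].
        apply (term_le_sumN N (fun b => Rabs (Q a b))); auto. intros; apply Rabs_pos. }
      pose proof (Rle_abs (- Q a a)). rewrite Rabs_Ropp in *. lra.
    - pose proof (proj1 HQ a b Ha Hb Hne). lra. }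
  apply Series_nonneg.
  - eapply ex_series_ext; [|exact (CV_radius_inside _ t (CV_radius_exp_gen N Q i j t Hi))].
    intros n. simpl. rewrite pow_n_pow. apply Rmult_comm.
  - intros n. apply Rmult_le_pos; [|apply pow_le; lra].
    unfold exp_coef, Rdiv. apply Rmult_le_pos; [now apply mat_pow_nonneg|].
    apply Rlt_le, Rinv_0_lt_compat, INR_fact_lt_0.
Qed.

Lemma trans_row_sum t i : (i < N)%nat -> sumN N (fun j => trans N Q t i j) = 1.
Proof.
  intros Hi.
  apply (linear_ode_unique N Q (fun s k => sumN N (fun j => trans N Q s k j)) (fun _ _ => 1)); auto.
  - intros k s Hk.
    apply (is_derive_Rext (fun s => sumN N (fun j => trans N Q s k j)) _ s
             (sumN N (fun j => sumN N (fun m => Q k m * trans N Q s m j))));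
      [reflexivity| |].
    + rewrite sumN_comm. apply sumN_ext. intros. now rewrite sumN_scal_l.
    + apply (is_derive_sumN N (fun j s => trans N Q s k j) (fun j s => sumN N (fun m => Q k m * trans N Q s m j))).
      intros j Hj. now apply is_derive_trans.
  - intros k s Hk. apply (is_derive_Rext (fun _ => 1) _ s 0); [reflexivity| |apply is_derive_Rconst].
    rewrite (sumN_ext N _ (fun m => Q k m)) by (intros; ring). symmetry. now apply (proj2 HQ).
  - intros k Hk. rewrite (sumN_ext N _ (fun j => kron k j * 1)) by (intros; rewrite trans_0; auto; ring).
    now rewrite sumN_kron_l.
Qed.

Lemma Rabs_trans_le_1 t i j : 0 <= t -> (i < N)%nat -> (j < N)%nat -> Rabs (trans N Q t i j) <= 1.
Proof.
  intros Ht Hi Hj. rewrite Rabs_pos_eq by now apply trans_nonneg.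
  rewrite <- (trans_row_sum t i Hi).
  apply (term_le_sumN N (fun j => trans N Q t i j)); auto. intros; now apply trans_nonneg.
Qed.

End Transition.

Lemma trans_opp N Q e k m : (k < N)%nat -> (m < N)%nat ->
  trans N Q (- e) k m = trans N (fun a b => - Q a b) e k m.
Proof.
  intros Hk Hm. apply (trans_unique N (fun a b => - Q a b) (fun s => trans N Q (- s))); auto.
  split.
  - intros i j Hi Hj. rewrite Ropp_0. now apply trans_0.
  - intros i j s Hi Hj. apply is_derive_Reals.
    apply (is_derive_Rext (fun s => trans N Q (- s) i j) _ s
             (-1 * sumN N (fun k => Q i k * trans N Q (- s) k j))); [reflexivity| |].
    + rewrite <- sumN_scal_l. apply sumN_ext. intros; ring.
    + apply (is_derive_Rcomp (fun x => trans N Q x i j) (fun s => - s));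
        [now apply is_derive_trans|apply is_derive_Rneg].
Qed.

(** * Extending a C^1 function on [0, +oo) to R *)

(* Affine continuation to the left of 0, so that two-sided calculus applies. *)
Definition C1_ext (g g' : R -> R) (t : R) : R := if Rle_dec 0 t then g t else g 0 + t * g' 0.
Definition C1_ext_deriv (g' : R -> R) (t : R) : R := if Rle_dec 0 t then g' t else g' 0.

Lemma C1_ext_nonneg g g' t : 0 <= t -> C1_ext g g' t = g t.
Proof. intros. unfold C1_ext. destruct (Rle_dec 0 t); [auto|lra]. Qed.

Lemma C1_ext_deriv_nonneg g' t : 0 <= t -> C1_ext_deriv g' t = g' t.
Proof. intros. unfold C1_ext_deriv. destruct (Rle_dec 0 t); [auto|lra]. Qed.

Lemma is_derive_C1_ext g g' : C1_nonneg g g' -> forall t, is_derive (C1_ext g g') t (C1_ext_deriv g' t).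
Proof.
  intros [Hd _] t. apply is_derive_Reals. intros eta Heta.
  destruct (Rlt_le_dec 0 t) as [Ht|Ht].
  - destruct (Hd t (Rlt_le _ _ Ht) eta Heta) as [d [Hd0 Hh]].
    exists (mkposreal (Rmin d t) (Rmin_pos _ _ Hd0 Ht)). intros h Hh0 Hhd. simpl in Hhd.
    assert (Rabs h < d) by (pose proof (Rmin_l d t); lra).
    assert (Rabs h < t) by (pose proof (Rmin_r d t); lra).
    assert (0 <= t + h) by (pose proof (Rle_abs (- h)); rewrite Rabs_Ropp in *; lra).
    rewrite !C1_ext_nonneg, C1_ext_deriv_nonneg by lra. now apply Hh.
  - destruct (Req_dec t 0) as [->|Htn].
    + destruct (Hd 0 (Rle_refl 0) eta Heta) as [d [Hd0 Hh]].
      exists (mkposreal d Hd0). intros h Hh0 Hhd. simpl in Hhd.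
      rewrite C1_ext_deriv_nonneg, (C1_ext_nonneg g g' 0) by lra.
      destruct (Rle_dec 0 h).
      * rewrite C1_ext_nonneg by lra. apply Hh; auto. lra.
      * unfold C1_ext at 1. destruct (Rle_dec 0 (0 + h)); [lra|].
        replace ((g 0 + (0 + h) * g' 0 - g 0) / h - g' 0) with 0 by (field; auto).
        rewrite Rabs_R0; auto.
    + exists (mkposreal (- t) ltac:(lra)). intros h Hh0 Hhd. simpl in Hhd.
      assert (t + h < 0) by (pose proof (Rle_abs h); lra).
      unfold C1_ext, C1_ext_deriv. destruct (Rle_dec 0 (t + h)); [lra|]. destruct (Rle_dec 0 t); [lra|].
      replace ((g 0 + (t + h) * g' 0 - (g 0 + t * g' 0)) / h - g' 0) with 0 by (field; auto).
      rewrite Rabs_R0; auto.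
Qed.

Lemma continuous_C1_ext_deriv g g' : C1_nonneg g g' -> forall t, continuous (C1_ext_deriv g') t.
Proof.
  intros [_ Hc] t. apply continuous_of_eps_delta. intros eta Heta.
  destruct (Rlt_le_dec 0 t) as [Ht|Ht].
  - destruct (Hc t (Rlt_le _ _ Ht) eta Heta) as [d [Hd0 Hh]].
    exists (Rmin d t). split; [now apply Rmin_pos|]. intros y Hy.
    assert (Rabs (y - t) < d) by (pose proof (Rmin_l d t); lra).
    assert (Rabs (y - t) < t) by (pose proof (Rmin_r d t); lra).
    assert (0 <= y) by (pose proof (Rle_abs (- (y - t))); rewrite Rabs_Ropp in *; lra).
    rewrite !C1_ext_deriv_nonneg by lra. now apply Hh.
  - destruct (Req_dec t 0) as [->|Htn].
    + destruct (Hc 0 (Rle_refl 0) eta Heta) as [d [Hd0 Hh]]. exists d. split; auto. intros y Hy.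
      rewrite (C1_ext_deriv_nonneg g' 0) by lra. unfold C1_ext_deriv at 1. destruct (Rle_dec 0 y).
      * now apply Hh.
      * rewrite Rminus_diag, Rabs_R0. auto.
    + exists (- t). split; [lra|]. intros y Hy. assert (y < 0) by (pose proof (Rle_abs (y - t)); lra).
      unfold C1_ext_deriv. destruct (Rle_dec 0 y); [lra|]. destruct (Rle_dec 0 t); [lra|].
      rewrite Rminus_diag, Rabs_R0. auto.
Qed.

(** * Expansions at [0+] *)

Definition expansion1 (u : R -> R) (c0 c1 : R) : Prop :=
  forall eta, 0 < eta -> exists delta, 0 < delta /\
    forall e, 0 < e < delta -> Rabs (u e - (c0 + c1 * e)) <= eta * e.

Definition expansion2 (u : R -> R) (c0 c1 c2 : R) : Prop :=
  forall eta, 0 < eta -> exists delta, 0 < delta /\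
    forall e, 0 < e < delta -> Rabs (u e - (c0 + c1 * e + c2 * e ^ 2)) <= eta * e ^ 2.

Lemma expansion1_of_is_derive u l : is_derive u 0 l -> expansion1 u (u 0) l.
Proof.
  intros H eta Heta. apply is_derive_Reals in H. destruct (H eta Heta) as [d Hd].
  exists d. split; [apply cond_pos|]. intros e He.
  specialize (Hd e ltac:(lra) ltac:(rewrite Rabs_pos_eq; lra)).
  rewrite Rplus_0_l in Hd.
  replace (u e - (u 0 + l * e)) with (e * ((u e - u 0) / e - l)) by (field; lra).
  rewrite Rabs_mult, Rabs_pos_eq by lra. rewrite Rmult_comm. apply Rmult_le_compat_r; lra.
Qed.

Lemma expansion2_ext u v c0 c1 c2 :
  (forall e, 0 < e -> u e = v e) -> expansion2 u c0 c1 c2 -> expansion2 v c0 c1 c2.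
Proof.
  intros He H eta Heta. destruct (H eta Heta) as [d [Hd Hb]].
  exists d. split; auto. intros. rewrite <- He by lra. auto.
Qed.

Lemma expansion2_coef u c0 c1 c2 d0 d1 d2 :
  c0 = d0 -> c1 = d1 -> c2 = d2 -> expansion2 u c0 c1 c2 -> expansion2 u d0 d1 d2.
Proof. intros -> -> ->. auto. Qed.

Lemma expansion2_const c : expansion2 (fun _ => c) c 0 0.
Proof.
  intros eta Heta. exists 1. split; [lra|]. intros e He.
  replace (c - (c + 0 * e + 0 * e ^ 2)) with 0 by ring. rewrite Rabs_R0.
  pose proof (pow2_ge_0 e). nra.
Qed.

Lemma expansion2_plus u v a0 a1 a2 b0 b1 b2 : expansion2 u a0 a1 a2 -> expansion2 v b0 b1 b2 ->
  expansion2 (fun e => u e + v e) (a0 + b0) (a1 + b1) (a2 + b2).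
Proof.
  intros Hu Hv eta Heta.
  destruct (Hu (eta / 2) ltac:(lra)) as [d1 [Hd1 H1]]. destruct (Hv (eta / 2) ltac:(lra)) as [d2 [Hd2 H2]].
  exists (Rmin d1 d2). split; [now apply Rmin_pos|]. intros e He.
  assert (e < d1) by (pose proof (Rmin_l d1 d2); lra). assert (e < d2) by (pose proof (Rmin_r d1 d2); lra).
  specialize (H1 e ltac:(lra)). specialize (H2 e ltac:(lra)).
  replace (u e + v e - (a0 + b0 + (a1 + b1) * e + (a2 + b2) * e ^ 2))
    with ((u e - (a0 + a1 * e + a2 * e ^ 2)) + (v e - (b0 + b1 * e + b2 * e ^ 2))) by ring.
  eapply Rle_trans; [apply Rabs_triang|]. lra.
Qed.

Lemma expansion2_scal c u a0 a1 a2 : expansion2 u a0 a1 a2 ->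
  expansion2 (fun e => c * u e) (c * a0) (c * a1) (c * a2).
Proof.
  intros Hu eta Heta. pose proof (Rabs_pos c).
  destruct (Hu (eta / (Rabs c + 1))) as [d [Hd Hb]]; [apply Rdiv_lt_0_compat; lra|].
  exists d. split; auto. intros e He. specialize (Hb e He).
  replace (c * u e - (c * a0 + c * a1 * e + c * a2 * e ^ 2))
    with (c * (u e - (a0 + a1 * e + a2 * e ^ 2))) by ring.
  rewrite Rabs_mult. pose proof (Rabs_pos (u e - (a0 + a1 * e + a2 * e ^ 2))). pose proof (pow2_ge_0 e).
  apply Rle_trans with ((Rabs c + 1) * (eta / (Rabs c + 1) * e ^ 2)); [nra|]. right; field; lra.
Qed.

Lemma expansion2_sumN n (F : nat -> R -> R) c0 c1 c2 :
  (forall k, (k < n)%nat -> expansion2 (F k) (c0 k) (c1 k) (c2 k)) ->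
  expansion2 (fun e => sumN n (fun k => F k e)) (sumN n c0) (sumN n c1) (sumN n c2).
Proof.
  induction n as [|n IH]; intros H.
  - unfold sumN. simpl. apply expansion2_const.
  - apply (expansion2_ext (fun e => sumN n (fun k => F k e) + F n e)); [intros; symmetry; apply sumN_S|].
    rewrite !sumN_S. apply expansion2_plus; [apply IH; intros|]; apply H; lia.
Qed.

Lemma expansion2_minus u v a0 a1 a2 b0 b1 b2 : expansion2 u a0 a1 a2 -> expansion2 v b0 b1 b2 ->
  expansion2 (fun e => u e - v e) (a0 - b0) (a1 - b1) (a2 - b2).
Proof.
  intros Hu Hv. apply (expansion2_ext (fun e => u e + -1 * v e)); [intros; ring|].
  apply (expansion2_coef _ (a0 + -1 * b0) (a1 + -1 * b1) (a2 + -1 * b2)); try ring.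
  apply expansion2_plus; [exact Hu|now apply expansion2_scal].
Qed.

Lemma Rabs_4_le a b c d : Rabs (a + b + c + d) <= Rabs a + Rabs b + Rabs c + Rabs d.
Proof.
  eapply Rle_trans; [apply Rabs_triang|].
  pose proof (Rabs_triang (a + b) c). pose proof (Rabs_triang a b). lra.
Qed.

Lemma Rabs_poly2_le a0 a1 a2 e : 0 <= e <= 1 ->
  Rabs (a0 + a1 * e + a2 * e ^ 2) <= Rabs a0 + Rabs a1 + Rabs a2.
Proof.
  intros He. assert (0 <= e ^ 2 <= 1) by (simpl; nra).
  eapply Rle_trans; [apply Rabs_triang|]. eapply Rle_trans; [apply Rplus_le_compat_r, Rabs_triang|].
  rewrite !Rabs_mult, (Rabs_pos_eq e), (Rabs_pos_eq (e ^ 2)) by lra.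
  pose proof (Rabs_pos a1). pose proof (Rabs_pos a2). nra.
Qed.

Lemma Rabs_mult_le_sq x y K : Rabs x <= K -> Rabs y <= K -> Rabs (x * y) <= K * K.
Proof. intros. rewrite Rabs_mult. apply Rmult_le_compat; auto; apply Rabs_pos. Qed.

Lemma Rabs_product_error_le (r s U V W e K z : R) : 1 <= K -> 0 < e < z -> z <= 1 ->
  Rabs r <= z * e ^ 2 -> Rabs s <= z * e ^ 2 -> Rabs U <= K -> Rabs V <= K -> Rabs W <= 3 * K * K ->
  Rabs (r * V + U * s + r * s + W * e ^ 3) <= 6 * K * K * z * e ^ 2.
Proof.
  intros HK He Hz Hr Hs HU HV HW.
  assert (He2 : 0 <= e ^ 2) by apply pow2_ge_0.
  eapply Rle_trans; [apply Rabs_4_le|].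
  rewrite !Rabs_mult, (Rabs_pos_eq (e ^ 3)) by (apply pow_le; lra).
  pose proof (Rabs_pos r). pose proof (Rabs_pos s). pose proof (Rabs_pos U). pose proof (Rabs_pos V).
  assert (Hs1 : Rabs s <= K) by nra.
  assert (He3 : e ^ 3 <= z * e ^ 2) by (simpl; simpl in He2; nra).
  assert (Rabs r * Rabs V + Rabs U * Rabs s + Rabs r * Rabs s <= 3 * K * (z * e ^ 2)) by nra.
  assert (Rabs W * e ^ 3 <= 3 * K * K * (z * e ^ 2))
    by (apply Rmult_le_compat; [apply Rabs_pos|apply pow_le; lra|exact HW|exact He3]).
  assert (3 * K * (z * e ^ 2) <= 3 * K * K * (z * e ^ 2)) by (apply Rmult_le_compat_r; nra).
  lra.
Qed.

Lemma expansion2_mult u v a0 a1 a2 b0 b1 b2 : expansion2 u a0 a1 a2 -> expansion2 v b0 b1 b2 ->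
  expansion2 (fun e => u e * v e) (a0 * b0) (a0 * b1 + a1 * b0) (a0 * b2 + a1 * b1 + a2 * b0).
Proof.
  intros Hu Hv eta Heta.
  pose proof (Rabs_pos a0); pose proof (Rabs_pos a1); pose proof (Rabs_pos a2).
  pose proof (Rabs_pos b0); pose proof (Rabs_pos b1); pose proof (Rabs_pos b2).
  set (K := Rabs a0 + Rabs a1 + Rabs a2 + Rabs b0 + Rabs b1 + Rabs b2 + 1).
  set (z := Rmin 1 (eta / (6 * K * K))).
  assert (HK : 1 <= K) by (unfold K; lra).
  assert (Hz : 0 < z) by (apply Rmin_pos; [lra|apply Rdiv_lt_0_compat; nra]).
  assert (Hz1 : z <= 1) by apply Rmin_l.
  assert (Hzeta : 6 * K * K * z <= eta).
  { apply Rle_trans with (6 * K * K * (eta / (6 * K * K))); [|right; field; lra].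
    apply Rmult_le_compat_l; [nra|apply Rmin_r]. }
  destruct (Hu z Hz) as [d1 [Hd1 Hu1]]. destruct (Hv z Hz) as [d2 [Hd2 Hv1]].
  exists (Rmin (Rmin d1 d2) z). split; [apply Rmin_pos; [apply Rmin_pos|]; auto|]. intros e He.
  pose proof (Rmin_l (Rmin d1 d2) z); pose proof (Rmin_r (Rmin d1 d2) z).
  pose proof (Rmin_l d1 d2); pose proof (Rmin_r d1 d2).
  specialize (Hu1 e ltac:(lra)). specialize (Hv1 e ltac:(lra)).
  set (U := a0 + a1 * e + a2 * e ^ 2) in *. set (V := b0 + b1 * e + b2 * e ^ 2) in *.
  set (r := u e - U) in *. set (s := v e - V) in *.
  replace (u e * v e - (a0 * b0 + (a0 * b1 + a1 * b0) * e + (a0 * b2 + a1 * b1 + a2 * b0) * e ^ 2))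
    with (r * V + U * s + r * s + (a1 * b2 + a2 * b1 + a2 * b2 * e) * e ^ 3) by (unfold r, s, U, V; ring).
  assert (He2 : 0 <= e ^ 2) by apply pow2_ge_0.
  assert (HU : Rabs U <= K) by (eapply Rle_trans; [apply Rabs_poly2_le; lra|unfold K; lra]).
  assert (HV : Rabs V <= K) by (eapply Rle_trans; [apply Rabs_poly2_le; lra|unfold K; lra]).
  assert (HW : Rabs (a1 * b2 + a2 * b1 + a2 * b2 * e) <= 3 * K * K).
  { assert (Rabs (a2 * b2 * e) <= K * K).
    { rewrite Rabs_mult, (Rabs_pos_eq e) by lra.
      pose proof (Rabs_mult_le_sq a2 b2 K ltac:(unfold K; lra) ltac:(unfold K; lra)). nra. }
    pose proof (Rabs_mult_le_sq a1 b2 K ltac:(unfold K; lra) ltac:(unfold K; lra)).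
    pose proof (Rabs_mult_le_sq a2 b1 K ltac:(unfold K; lra) ltac:(unfold K; lra)).
    eapply Rle_trans; [apply Rabs_triang|]. pose proof (Rabs_triang (a1 * b2) (a2 * b1)). lra. }
  apply Rle_trans with (6 * K * K * z * e ^ 2); [apply Rabs_product_error_le; auto; lra|].
  apply Rmult_le_compat_r; lra.
Qed.

Lemma RInt_affine (a b e : R) : RInt (fun t => a + b * t) 0 e = a * e + b / 2 * e ^ 2.
Proof.
  apply is_RInt_unique.
  replace (a * e + b / 2 * e ^ 2) with ((a * e + b / 2 * e ^ 2) - (a * 0 + b / 2 * 0 ^ 2)) by ring.
  apply (is_RInt_derive (fun t => a * t + b / 2 * t ^ 2) (fun t => a + b * t)).
  - intros x _. auto_derive; [auto|field].
  - intros x _. apply continuous_Rplus; [apply continuous_const|].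
    apply continuous_Rmult; [apply continuous_const|apply continuous_id].
Qed.

Lemma expansion2_RInt (psi : R -> R) a b :
  (forall e, 0 < e -> ex_RInt psi 0 e) -> psi 0 = a -> expansion1 psi a b ->
  expansion2 (fun e => RInt psi 0 e) 0 a (b / 2).
Proof.
  intros Hex H0 H eta Heta. destruct (H eta Heta) as [d [Hd Hb]]. exists d. split; auto. intros e He.
  assert (Hl : ex_RInt (fun t => a + b * t) 0 e).
  { apply ex_RInt_Rcontinuous. intros. apply continuous_Rplus; [apply continuous_const|].
    apply continuous_Rmult; [apply continuous_const|apply continuous_id]. }
  replace (0 + a * e + b / 2 * e ^ 2) with (a * e + b / 2 * e ^ 2) by ring.
  rewrite <- RInt_affine.
  rewrite <- RInt_Rminus by (auto; apply Hex; lra).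
  eapply Rle_trans; [apply abs_RInt_le_const with (M := eta * e)|].
  - lra.
  - apply (ex_RInt_minus (V := R_CompleteNormedModule)); auto. apply Hex; lra.
  - intros t Ht. destruct (Req_dec t 0) as [->|Hne].
    + rewrite H0. replace (a - (a + b * 0)) with 0 by ring. rewrite Rabs_R0. nra.
    + eapply Rle_trans; [apply (Hb t); lra|]. apply Rmult_le_compat_l; lra.
  - simpl. nra.
Qed.

Lemma expansion2_of_is_derive (u du : R -> R) d2 : (forall t, is_derive u t (du t)) ->
  (forall t, continuous du t) -> expansion1 du (du 0) d2 -> expansion2 u (u 0) (du 0) (d2 / 2).
Proof.
  intros Hd Hc H1.
  apply (expansion2_ext (fun e => u 0 + RInt du 0 e)).
  - intros e He. rewrite (is_RInt_unique du 0 e (u e - u 0)); [ring|].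
    now apply (is_RInt_derive (V := R_CompleteNormedModule)).
  - apply (expansion2_coef _ (u 0 + 0) (0 + du 0) (0 + d2 / 2)); try ring.
    apply expansion2_plus; [apply expansion2_const|].
    apply expansion2_RInt; auto. intros. now apply ex_RInt_Rcontinuous.
Qed.

(** * Improper integrals on [0, +oo) *)

Definition is_RInt_inf (h : R -> R) (l : R) : Prop :=
  forall eta, 0 < eta -> exists B, 0 <= B /\
    forall b, B <= b -> ex_RInt h 0 b /\ Rabs (RInt h 0 b - l) < eta.

Lemma int0inf_unique h l : is_RInt_inf h l -> int0inf h = l.
Proof.
  intros H.
  set (P := fun l => forall eta, 0 < eta -> exists B, forall b, B <= b ->
     exists pr : Riemann_integrable h 0 b, Rabs (RiemannInt pr - l) < eta).
  assert (Hl : P l).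
  { intros eta Heta. destruct (H eta Heta) as [B [_ HB]]. exists B. intros b Hb.
    destruct (HB b Hb) as [He Hlt]. exists (ex_RInt_Reals_0 _ _ _ He). now rewrite <- RInt_Reals. }
  assert (Hs : P (int0inf h)) by (unfold int0inf; apply epsilon_spec; now exists l).
  destruct (Req_dec (int0inf h) l) as [E|Hne]; auto. exfalso.
  set (eta := Rabs (int0inf h - l) / 2).
  assert (Heta : 0 < eta) by (unfold eta; apply Rdiv_lt_0_compat; [apply Rabs_pos_lt; lra|lra]).
  destruct (Hl eta Heta) as [B1 H1]. destruct (Hs eta Heta) as [B2 H2].
  destruct (H1 (Rmax B1 B2) (Rmax_l _ _)) as [pr1 Hp1]. destruct (H2 (Rmax B1 B2) (Rmax_r _ _)) as [pr2 Hp2].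
  rewrite (RiemannInt_P5 pr1 pr2) in Hp1.
  assert (Rabs (int0inf h - l) <= Rabs (RiemannInt pr2 - l) + Rabs (RiemannInt pr2 - int0inf h)).
  { replace (int0inf h - l) with ((RiemannInt pr2 - l) - (RiemannInt pr2 - int0inf h)) by ring.
    eapply Rle_trans; [apply Rabs_triang|]. rewrite Rabs_Ropp. lra. }
  unfold eta in *. lra.
Qed.

Lemma is_RInt_inf_ext h1 h2 l : (forall t, 0 < t -> h1 t = h2 t) -> is_RInt_inf h1 l -> is_RInt_inf h2 l.
Proof.
  intros He H eta Heta. destruct (H eta Heta) as [B [HB0 HB]].
  exists (Rmax B 1). split; [pose proof (Rmax_r B 1); lra|]. intros b Hb.
  pose proof (Rmax_l B 1). pose proof (Rmax_r B 1).
  destruct (HB b ltac:(lra)) as [Hex Hlt].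
  assert (Hx : forall x, Rmin 0 b < x < Rmax 0 b -> h1 x = h2 x).
  { intros x Hx. rewrite Rmin_left, Rmax_right in Hx by lra. apply He; lra. }
  split; [eapply ex_RInt_ext; eauto|]. now rewrite <- (RInt_ext _ _ _ _ Hx).
Qed.

Lemma is_RInt_inf_plus h1 h2 l1 l2 :
  is_RInt_inf h1 l1 -> is_RInt_inf h2 l2 -> is_RInt_inf (fun t => h1 t + h2 t) (l1 + l2).
Proof.
  intros H1 H2 eta Heta.
  destruct (H1 (eta / 2) ltac:(lra)) as [B1 [HB1 P1]]. destruct (H2 (eta / 2) ltac:(lra)) as [B2 [HB2 P2]].
  exists (Rmax B1 B2). split; [pose proof (Rmax_l B1 B2); lra|]. intros b Hb.
  pose proof (Rmax_l B1 B2). pose proof (Rmax_r B1 B2).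
  destruct (P1 b ltac:(lra)) as [E1 L1]. destruct (P2 b ltac:(lra)) as [E2 L2].
  split; [now apply (ex_RInt_plus (V := R_CompleteNormedModule))|]. rewrite RInt_Rplus by auto.
  replace (RInt h1 0 b + RInt h2 0 b - (l1 + l2)) with ((RInt h1 0 b - l1) + (RInt h2 0 b - l2)) by ring.
  eapply Rle_lt_trans; [apply Rabs_triang|]. lra.
Qed.

Lemma is_RInt_inf_scal c h l : is_RInt_inf h l -> is_RInt_inf (fun t => c * h t) (c * l).
Proof.
  intros H eta Heta. pose proof (Rabs_pos c).
  destruct (H (eta / (Rabs c + 1))) as [B [HB0 HB]]; [apply Rdiv_lt_0_compat; lra|].
  exists B. split; auto. intros b Hb. destruct (HB b Hb) as [E Lt].
  split; [now apply (ex_RInt_scal (V := R_CompleteNormedModule))|]. rewrite RInt_Rscal by auto.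
  replace (c * RInt h 0 b - c * l) with (c * (RInt h 0 b - l)) by ring. rewrite Rabs_mult.
  pose proof (Rabs_pos (RInt h 0 b - l)).
  apply Rle_lt_trans with (Rabs c * (eta / (Rabs c + 1))); [apply Rmult_le_compat_l; lra|].
  apply Rlt_le_trans with ((Rabs c + 1) * (eta / (Rabs c + 1))); [nra|]. right; field; lra.
Qed.

Lemma is_RInt_inf_sumN n (F : nat -> R -> R) (L : nat -> R) :
  (forall k, (k < n)%nat -> is_RInt_inf (F k) (L k)) ->
  is_RInt_inf (fun t => sumN n (fun k => F k t)) (sumN n L).
Proof.
  induction n as [|n IH]; intros H.
  - intros eta Heta. exists 0. split; [lra|]. intros b Hb. unfold sumN. simpl.
    rewrite RInt_const, Rmult_0_r, Rminus_0_r, Rabs_R0. split; [apply ex_RInt_const|auto].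
  - rewrite sumN_S. apply (is_RInt_inf_ext (fun t => sumN n (fun k => F k t) + F n t)).
    + intros. symmetry. apply sumN_S.
    + apply is_RInt_inf_plus; [apply IH; intros|]; apply H; lia.
Qed.

Lemma is_RInt_inf_splice (h head tail : R -> R) e L : 0 < e ->
  (forall t, continuous head t) -> (forall t, continuous tail t) ->
  (forall t, 0 < t <= e -> h t = head t) -> (forall t, e < t -> h t = tail t) ->
  is_RInt_inf tail L -> is_RInt_inf h (RInt head 0 e + (L - RInt tail 0 e)).
Proof.
  intros He Hhead Htail H1 H2 HL eta Heta. destruct (HL eta Heta) as [B [HB0 HB]].
  exists (Rmax B e). split; [pose proof (Rmax_l B e); lra|]. intros b Hb.
  pose proof (Rmax_l B e). pose proof (Rmax_r B e). destruct (HB b ltac:(lra)) as [_ Lt].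
  assert (E1 : forall x, Rmin 0 e < x < Rmax 0 e -> head x = h x).
  { intros x Hx. rewrite Rmin_left, Rmax_right in Hx by lra. symmetry. apply H1. lra. }
  assert (E2 : forall x, Rmin e b < x < Rmax e b -> tail x = h x).
  { intros x Hx. rewrite Rmin_left, Rmax_right in Hx by lra. symmetry. apply H2. lra. }
  assert (Ex1 : ex_RInt h 0 e) by (apply (ex_RInt_ext head); auto; now apply ex_RInt_Rcontinuous).
  assert (Ex2 : ex_RInt h e b) by (apply (ex_RInt_ext tail); auto; now apply ex_RInt_Rcontinuous).
  split; [now apply (ex_RInt_Chasles h 0 e b)|].
  rewrite <- (RInt_RChasles h 0 e b), <- (RInt_ext _ _ _ _ E1), <- (RInt_ext _ _ _ _ E2) by auto.
  rewrite <- (RInt_RChasles tail 0 e b) in Lt by (now apply ex_RInt_Rcontinuous).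
  replace (RInt head 0 e + RInt tail e b - (RInt head 0 e + (L - RInt tail 0 e)))
    with (RInt tail 0 e + RInt tail e b - L) by ring.
  exact Lt.
Qed.

Definition bounded_RInt (phi : R -> R) : Prop := exists M, forall b, 0 <= b -> RInt phi 0 b <= M.

Lemma bounded_RInt_sumN n (F : nat -> R -> R) : (forall j t, (j < n)%nat -> continuous (F j) t) ->
  (forall j, (j < n)%nat -> bounded_RInt (F j)) -> bounded_RInt (fun t => sumN n (fun j => F j t)).
Proof.
  induction n as [|n IH]; intros Hc HB.
  - exists 0. intros b Hb. unfold sumN. simpl. rewrite RInt_Rconst. lra.
  - destruct IH as [M1 H1]; [intros; apply Hc; lia|intros; apply HB; lia|].
    destruct (HB n ltac:(lia)) as [M2 H2]. exists (M1 + M2). intros b Hb.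
    rewrite (RInt_ext _ (fun t => sumN n (fun j => F j t) + F n t)) by (intros; apply sumN_S).
    rewrite RInt_Rplus.
    + pose proof (H1 b Hb). pose proof (H2 b Hb). lra.
    + apply ex_RInt_Rcontinuous. intros. apply continuous_sumN. intros. apply Hc; lia.
    + apply ex_RInt_Rcontinuous. intros. apply Hc; lia.
Qed.

Section Dominated.

Variables (phi : R -> R).
Hypotheses (Hphi_cont : forall t, continuous phi t) (Hphi : bounded_RInt phi).

Lemma RInt_tail_small : (forall t, 0 <= t -> 0 <= phi t) ->
  forall eta, 0 < eta -> exists B, 0 <= B /\ forall b1 b2, B <= b1 <= b2 -> RInt phi b1 b2 <= eta.
Proof.
  intros Hp eta Heta. destruct Hphi as [M HM].
  assert (Ex : forall a b, ex_RInt phi a b) by (intros; now apply ex_RInt_Rcontinuous).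
  assert (Hmono : forall b1 b2, 0 <= b1 <= b2 -> RInt phi 0 b1 <= RInt phi 0 b2).
  { intros b1 b2 Hb. rewrite <- (RInt_RChasles phi 0 b1 b2) by auto.
    assert (0 <= RInt phi b1 b2) by (apply RInt_Rnonneg; [lra|auto|intros; apply Hp; lra]). lra. }
  (* the partial integrals increase to their supremum [s] *)
  set (E := fun x => exists b, 0 <= b /\ x = RInt phi 0 b).
  destruct (completeness E) as [s [Hub Hlub]].
  { exists M. intros x [b [Hb ->]]. auto. }
  { exists (RInt phi 0 0). exists 0. split; [lra|auto]. }
  assert (Hex : exists b0, 0 <= b0 /\ s - eta < RInt phi 0 b0).
  { apply Classical_Prop.NNPP. intros Hn.
    assert (is_upper_bound E (s - eta)).
    { intros x [b [Hb ->]]. apply Rnot_lt_le. intros Hlt. apply Hn. exists b. auto. }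
    specialize (Hlub _ H). lra. }
  destruct Hex as [b0 [Hb0 Hlt]]. exists b0. split; auto. intros b1 b2 Hb.
  assert (RInt phi 0 b2 <= s) by (apply Hub; exists b2; split; [lra|auto]).
  assert (RInt phi 0 b0 <= RInt phi 0 b1) by (apply Hmono; lra).
  rewrite <- (RInt_RChasles phi 0 b1 b2) in H by auto. lra.
Qed.

Variable (h : R -> R).
Hypotheses (Hh_cont : forall t, continuous h t) (Hdom : forall t, 0 <= t -> Rabs (h t) <= phi t).

Lemma Rabs_RInt_le_dominating b1 b2 : 0 <= b1 <= b2 -> Rabs (RInt h b1 b2) <= RInt phi b1 b2.
Proof.
  intros Hb. eapply Rle_trans; [apply abs_RInt_le; [lra|now apply ex_RInt_Rcontinuous]|].
  apply RInt_Rle; [lra| |now apply ex_RInt_Rcontinuous|intros; apply Hdom; lra].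
  apply ex_RInt_Rcontinuous. intros. now apply continuous_Rabs_comp.
Qed.

Lemma is_RInt_inf_dominated : exists l, is_RInt_inf h l.
Proof.
  assert (Htail : forall eta, 0 < eta -> exists B, 0 <= B /\ forall b1 b2, B <= b1 <= b2 ->
                    Rabs (RInt h b1 b2) <= eta).
  { intros eta Heta. destruct RInt_tail_small with (eta := eta) as [B [HB0 HB]]; auto.
    - intros t Ht. pose proof (Hdom t Ht). pose proof (Rabs_pos (h t)). lra.
    - exists B. split; auto. intros b1 b2 Hb.
      eapply Rle_trans; [apply Rabs_RInt_le_dominating; lra|]. now apply HB. }
  assert (Ex : forall a b, ex_RInt h a b) by (intros; now apply ex_RInt_Rcontinuous).
  set (u := fun n : nat => RInt h 0 (INR n)).
  assert (Hcau : ex_lim_seq_cauchy u).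
  { intros eps. destruct (Htail (eps / 2)) as [B [HB0 HB]]; [destruct eps; simpl; lra|].
    destruct (INR_unbounded B) as [N HN]. exists N.
    assert (H : forall p q, (N <= p)%nat -> (p <= q)%nat -> Rabs (u q - u p) <= eps / 2).
    { intros p q Hp Hpq. unfold u. rewrite <- (RInt_RChasles h 0 (INR p) (INR q)) by auto.
      rewrite Rplus_minus_l.
      apply le_INR in Hp. apply le_INR in Hpq. apply HB. lra. }
    intros n m Hn Hm. destruct (Nat.le_ge_cases n m) as [Hnm|Hnm].
    - specialize (H n m Hn Hnm). rewrite Rabs_minus_sym in H. destruct eps; simpl in *; lra.
    - specialize (H m n Hm Hnm). destruct eps; simpl in *; lra. }
  apply ex_lim_seq_cauchy_corr in Hcau. destruct Hcau as [l Hl]. exists l.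
  apply is_lim_seq_spec in Hl.
  intros eta Heta. destruct (Hl (mkposreal (eta / 2) ltac:(lra))) as [N1 HN1].
  destruct (Htail (eta / 4) ltac:(lra)) as [B [HB0 HB]].
  exists (Rmax B (INR N1)). split; [pose proof (Rmax_l B (INR N1)); lra|]. intros b Hb2.
  pose proof (Rmax_l B (INR N1)). pose proof (Rmax_r B (INR N1)).
  split; [auto|].
  destruct (INR_unbounded b) as [n Hn]. set (n' := Nat.max n N1).
  assert (INR n <= INR n') by (apply le_INR; lia). assert (N1 <= n')%nat by lia.
  specialize (HN1 n' H2). simpl in HN1. unfold u in HN1.
  assert (Rabs (RInt h b (INR n')) <= eta / 4) by (apply HB; lra).
  rewrite <- (RInt_RChasles h 0 b (INR n')) in HN1 by auto.
  replace (RInt h 0 b - l) with ((RInt h 0 b + RInt h b (INR n') - l) - RInt h b (INR n')) by ring.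
  eapply Rle_lt_trans; [apply Rabs_triang|]. rewrite Rabs_Ropp. lra.
Qed.

End Dominated.

(** * Condition (I) bounds integrals *)

(* [Rmax 0 (Rmin 1 x)], written with [Rabs] so that continuity is immediate. *)
Definition clamp01 (x : R) : R := (Rabs x - Rabs (x - 1) + 1) / 2.

Lemma clamp01_le0 x : x <= 0 -> clamp01 x = 0.
Proof. intros. unfold clamp01. rewrite (Rabs_left1 x), (Rabs_left1 (x - 1)) by lra. field. Qed.

Lemma clamp01_ge1 x : 1 <= x -> clamp01 x = 1.
Proof. intros. unfold clamp01. rewrite (Rabs_pos_eq x), (Rabs_pos_eq (x - 1)) by lra. field. Qed.

Lemma clamp01_id x : 0 <= x <= 1 -> clamp01 x = x.
Proof. intros. unfold clamp01. rewrite (Rabs_pos_eq x), (Rabs_left1 (x - 1)) by lra. field. Qed.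

Lemma clamp01_range x : 0 <= clamp01 x <= 1.
Proof.
  destruct (Rle_dec x 0); [rewrite clamp01_le0; lra|].
  destruct (Rle_dec 1 x); [rewrite clamp01_ge1; lra|].
  rewrite clamp01_id; lra.
Qed.

Lemma clamp01_pos x : 0 < clamp01 x -> 0 < x.
Proof. intros H. destruct (Rle_dec x 0); [rewrite clamp01_le0 in H; lra|lra]. Qed.

Lemma clamp01_le x y : x <= y -> clamp01 x <= clamp01 y.
Proof.
  intros H. pose proof (clamp01_range x). pose proof (clamp01_range y).
  destruct (Rle_dec x 0); [rewrite (clamp01_le0 x); lra|].
  destruct (Rle_dec 1 y); [rewrite (clamp01_ge1 y); lra|].
  rewrite (clamp01_id x), (clamp01_id y); lra.
Qed.

Lemma continuous_clamp01 (f : R -> R) t : continuous f t -> continuous (fun s => clamp01 (f s)) t.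
Proof.
  intros H. apply (continuous_Rext (fun s => / 2 * (Rabs (f s) - Rabs (f s - 1) + 1))).
  { intros. unfold clamp01, Rdiv. apply Rmult_comm. }
  apply continuous_Rmult; [apply continuous_const|]. apply continuous_Rplus; [|apply continuous_const].
  apply continuous_Rminus; apply continuous_Rabs_comp; auto.
  apply continuous_Rminus; auto. apply continuous_const.
Qed.

Lemma Rmin_Rabs x y : Rmin x y = (x + y - Rabs (x - y)) / 2.
Proof.
  unfold Rmin. destruct (Rle_dec x y); [rewrite Rabs_left1|rewrite Rabs_pos_eq]; lra.
Qed.

Definition trapezoid (a b tau t : R) : R := clamp01 ((Rmin (t - a) (b - t) + tau) / tau).

Lemma continuous_trapezoid a b tau t : continuous (trapezoid a b tau) t.
Proof.
  apply continuous_clamp01.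
  apply (continuous_Rext (fun s => (/ 2 * ((s - a) + (b - s) - Rabs ((s - a) - (b - s))) + tau) * / tau)).
  { intros s. rewrite Rmin_Rabs. unfold Rdiv. ring. }
  assert (Hl : forall c, continuous (fun s : R => s - c) t)
    by (intros; apply continuous_Rminus; [apply continuous_id|apply continuous_const]).
  assert (Hr : forall c, continuous (fun s : R => c - s) t)
    by (intros; apply continuous_Rminus; [apply continuous_const|apply continuous_id]).
  apply continuous_Rmult; [|apply continuous_const]. apply continuous_Rplus; [|apply continuous_const].
  apply continuous_Rmult; [apply continuous_const|].
  apply continuous_Rminus; [apply continuous_Rplus; auto|].
  apply continuous_Rabs_comp, continuous_Rminus; auto.
Qed.

Lemma trapezoid_range a b tau t : 0 <= trapezoid a b tau t <= 1.
Proof. apply clamp01_range. Qed.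

Lemma trapezoid_inside a b tau t : 0 < tau -> a < t < b -> trapezoid a b tau t = 1.
Proof.
  intros Ht Hab. unfold trapezoid. apply clamp01_ge1.
  assert (0 <= Rmin (t - a) (b - t)) by (apply Rmin_glb; lra).
  apply (Rmult_le_reg_r tau); auto. unfold Rdiv. rewrite Rmult_assoc, Rinv_l by lra. lra.
Qed.

Lemma trapezoid_outside a b tau t : 0 < tau -> ~ (a - tau < t < b + tau) -> trapezoid a b tau t = 0.
Proof.
  intros Ht Hn. unfold trapezoid. apply clamp01_le0.
  assert (Rmin (t - a) (b - t) <= - tau).
  { destruct (Rle_dec t (a - tau)).
    - pose proof (Rmin_l (t - a) (b - t)). lra.
    - pose proof (Rmin_r (t - a) (b - t)). lra. }
  unfold Rdiv. apply Rmult_le_0_r; [lra|]. apply Rlt_le, Rinv_0_lt_compat; lra.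
Qed.

Lemma RInt_le_support_length (psi : R -> R) c d b : (forall t, continuous psi t) ->
  (forall t, 0 <= psi t <= 1) -> (forall t, ~ (c < t < d) -> psi t = 0) -> c <= d -> 0 <= b ->
  RInt psi 0 b <= d - c.
Proof.
  intros Hc Hr Hz Hcd Hb.
  pose proof (Rmin_l 0 c). pose proof (Rmin_r 0 c). pose proof (Rmax_l b d). pose proof (Rmax_r b d).
  set (m := Rmin 0 c) in *. set (M := Rmax b d) in *.
  assert (Ex : forall x y, ex_RInt psi x y) by (intros; now apply ex_RInt_Rcontinuous).
  assert (Hpos : forall x y, x <= y -> 0 <= RInt psi x y)
    by (intros; apply RInt_Rnonneg; auto; intros; apply Hr).
  assert (Hzero : forall x y, x <= y -> (forall t, x < t < y -> ~ (c < t < d)) -> RInt psi x y = 0).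
  { intros x y Hxy Hout. rewrite (RInt_ext _ (fun _ => 0)), RInt_Rconst; [apply Rmult_0_r|].
    intros t Ht. rewrite Rmin_left, Rmax_right in Ht by lra. apply Hz, Hout, Ht. }
  assert (HI1 : RInt psi 0 b <= RInt psi m M).
  { rewrite <- (RInt_RChasles psi m 0 M), <- (RInt_RChasles psi 0 b M) by auto.
    pose proof (Hpos m 0 ltac:(lra)). pose proof (Hpos b M ltac:(lra)). lra. }
  assert (HI2 : RInt psi m c = 0) by (apply Hzero; [lra|intros t Ht Hin; lra]).
  assert (HI3 : RInt psi d M = 0) by (apply Hzero; [lra|intros t Ht Hin; lra]).
  assert (HI4 : RInt psi c d <= d - c).
  { apply Rle_trans with (RInt (fun _ => 1) c d).
    - apply RInt_Rle; auto; [apply ex_RInt_const|intros; apply Hr].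
    - rewrite RInt_Rconst. lra. }
  rewrite <- (RInt_RChasles psi m c M), <- (RInt_RChasles psi c d M) in HI1 by auto. lra.
Qed.

Lemma finite_subcover_superlevel (rho : R -> R) (a b : nat -> R) bb theta :
  (forall t, continuous rho t) ->
  (forall t, 0 <= t <= bb -> theta <= rho t -> exists n, a n < t < b n) ->
  exists N0, forall t, 0 <= t <= bb -> theta <= rho t -> exists n, (n <= N0)%nat /\ a n < t < b n.
Proof.
  intros Hc Hcov. apply Classical_Prop.NNPP. intros Hn.
  (* Otherwise pick, for each [N0], a point [un N0] missed by the first [N0 + 1] intervals; a limit
     point of the [un N0] lies in the superlevel set, hence in some interval, which then contains
     infinitely many [un N0]. *)
  assert (Hall : forall N0, exists t, (0 <= t <= bb /\ theta <= rho t) /\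
                   forall n, (n <= N0)%nat -> ~ (a n < t < b n)).
  { intros N0. apply Classical_Prop.NNPP. intros Hn2. apply Hn. exists N0. intros t Ht Hr.
    apply Classical_Prop.NNPP. intros Hn3. apply Hn2. exists t. split; [auto|].
    intros n Hn4 Hin. apply Hn3. exists n. auto. }
  set (un := fun N0 => epsilon (inhabits 0) (fun t => (0 <= t <= bb /\ theta <= rho t) /\
                         forall n, (n <= N0)%nat -> ~ (a n < t < b n))).
  assert (Hun : forall N0, (0 <= un N0 <= bb /\ theta <= rho (un N0)) /\
                  forall n, (n <= N0)%nat -> ~ (a n < un N0 < b n))
    by (intros N0; apply epsilon_spec, Hall).
  destruct (Bolzano_Weierstrass un (fun c => 0 <= c <= bb) (compact_P3 0 bb)) as [l Hl];
    [intros; apply Hun|].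
  assert (Hnear : forall delta, 0 < delta -> forall N, exists p, (N <= p)%nat /\ Rabs (un p - l) < delta).
  { intros delta Hd N. destruct (Hl (disc l (mkposreal delta Hd)) N) as [p [Hp Hv]].
    - exists (mkposreal delta Hd). intros x Hx. exact Hx.
    - exists p. auto. }
  assert (Hl0 : 0 <= l).
  { apply Rnot_lt_le. intros Hlt. destruct (Hnear (- l) ltac:(lra) O) as [p [_ Hp]].
    destruct (Hun p) as [[Hp1 _] _]. pose proof (Rle_abs (un p - l)). lra. }
  assert (Hlb : l <= bb).
  { apply Rnot_lt_le. intros Hlt. destruct (Hnear (l - bb) ltac:(lra) O) as [p [_ Hp]].
    destruct (Hun p) as [[Hp1 _] _]. pose proof (Rle_abs (- (un p - l))). rewrite Rabs_Ropp in H. lra. }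
  assert (Hrl : theta <= rho l).
  { apply Rnot_lt_le. intros Hlt.
    destruct (eps_delta_of_continuous rho l (Hc l) (theta - rho l) ltac:(lra)) as [d [Hd Hy]].
    destruct (Hnear d Hd O) as [p [_ Hp]]. specialize (Hy _ Hp).
    destruct (Hun p) as [[_ Hp2] _]. pose proof (Rle_abs (rho (un p) - rho l)). lra. }
  destruct (Hcov l (conj Hl0 Hlb) Hrl) as [m Hm].
  destruct (Hnear (Rmin (l - a m) (b m - l)) ltac:(apply Rmin_pos; lra) m) as [p [Hp Hpl]].
  destruct (Hun p) as [_ Hp2]. apply (Hp2 m Hp).
  pose proof (Rmin_l (l - a m) (b m - l)). pose proof (Rmin_r (l - a m) (b m - l)).
  pose proof (Rle_abs (un p - l)). pose proof (Rle_abs (- (un p - l))). rewrite Rabs_Ropp in H2. lra.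
Qed.

Lemma RInt_trapezoids_le (a b : nat -> R) n theta tau bb : 0 < tau -> 0 <= bb -> (forall k, a k <= b k) ->
  RInt (fun t => theta + sumN n (fun k => trapezoid (a k) (b k) tau t)) 0 bb
  <= theta * bb + sumN n (fun k => b k - a k + 2 * tau).
Proof.
  intros Htau Hbb Hab. rewrite RInt_Rplus, RInt_Rconst, RInt_sumN.
  - apply Rplus_le_compat; [lra|]. apply sumN_le. intros k Hk.
    replace (b k - a k + 2 * tau) with ((b k + tau) - (a k - tau)) by ring.
    apply RInt_le_support_length; auto.
    + intros; apply continuous_trapezoid.
    + intros; apply trapezoid_range.
    + intros; now apply trapezoid_outside.
    + pose proof (Hab k). lra.
  - intros; apply ex_RInt_Rcontinuous; intros; apply continuous_trapezoid.
  - apply ex_RInt_const.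
  - apply ex_RInt_Rcontinuous; intros; apply continuous_sumN; intros; apply continuous_trapezoid.
Qed.

Lemma RInt_le_outer (rho : R -> R) (A : R -> Prop) m bb : (forall t, continuous rho t) ->
  (forall t, 0 <= rho t <= 1) -> (forall t, 0 <= t <= bb -> 0 < rho t -> A t) -> outer_le A m ->
  0 <= bb -> forall zeta, 0 < zeta -> RInt rho 0 bb <= m + zeta.
Proof.
  intros Hc Hr HA Hout Hbb zeta Hz.
  destruct (Hout (zeta / 3) ltac:(lra)) as [a [b [Hab [Hcov Hsum]]]].
  set (theta := zeta / (3 * (bb + 1))).
  assert (Hth : 0 < theta) by (unfold theta; apply Rdiv_lt_0_compat; lra).
  destruct (finite_subcover_superlevel rho a b bb theta Hc) as [N0 HN0].
  { intros t Ht Hr2. apply Hcov, HA; auto. lra. }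
  set (tau := zeta / (6 * (INR N0 + 1))).
  assert (Htau : 0 < tau) by (unfold tau; apply Rdiv_lt_0_compat; [lra|pose proof (pos_INR N0); lra]).
  (* [rho <= theta + sum of trapezoids over the finite subcover] *)
  set (g := fun t => theta + sumN (S N0) (fun n => trapezoid (a n) (b n) tau t)).
  assert (Hle : RInt rho 0 bb <= RInt g 0 bb).
  { apply RInt_Rle; [auto|now apply ex_RInt_Rcontinuous| |].
    { apply ex_RInt_Rcontinuous. intros t. apply continuous_Rplus; [apply continuous_const|].
      apply continuous_sumN. intros. apply continuous_trapezoid. }
    intros t Ht. unfold g.
    assert (0 <= sumN (S N0) (fun n => trapezoid (a n) (b n) tau t))
      by (apply sumN_nonneg; intros; apply trapezoid_range).
    destruct (Rlt_le_dec (rho t) theta) as [Hlt|Hge]; [lra|].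
    destruct (HN0 t Ht Hge) as [n [Hn Hin]].
    assert (trapezoid (a n) (b n) tau t <= sumN (S N0) (fun n => trapezoid (a n) (b n) tau t)).
    { apply (term_le_sumN (S N0) (fun n => trapezoid (a n) (b n) tau t)); [|lia].
      intros; apply trapezoid_range. }
    rewrite trapezoid_inside in H0 by auto. pose proof (Hr t). lra. }
  pose proof (RInt_trapezoids_le a b (S N0) theta tau bb Htau Hbb Hab) as Hgi. fold g in Hgi.
  rewrite sumN_plus, sumN_S_sum_f_R0, sumN_const, S_INR in Hgi. specialize (Hsum N0).
  assert (theta * bb <= zeta / 3).
  { unfold theta. apply Rle_trans with (zeta / (3 * (bb + 1)) * (bb + 1)); [|right; field; lra].
    apply Rmult_le_compat_l; [apply Rlt_le, Rdiv_lt_0_compat; lra|lra]. }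
  assert ((INR N0 + 1) * (2 * tau) = zeta / 3) by (unfold tau; field; pose proof (pos_INR N0); lra).
  lra.
Qed.

Lemma layer_sum_ge n : forall x, 0 <= x <= INR n + 1 -> x - 1 <= sumN n (fun k => clamp01 (x - INR (S k))).
Proof.
  induction n as [|n IH]; intros x Hx.
  - unfold sumN. simpl in *. lra.
  - rewrite sumN_S. pose proof (clamp01_range (x - INR (S n))).
    destruct (Rle_dec x (INR n + 1)) as [Hle|Hgt].
    + pose proof (IH x ltac:(lra)). lra.
    + assert (H1 := IH (INR n + 1) ltac:(pose proof (pos_INR n); lra)).
      assert (sumN n (fun k => clamp01 (INR n + 1 - INR (S k))) <= sumN n (fun k => clamp01 (x - INR (S k))))
        by (apply sumN_le; intros; apply clamp01_le; lra).
      rewrite S_INR in *. rewrite clamp01_id by lra. lra.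
Qed.

Lemma continuous_layer (phi : R -> R) delta k t : continuous phi t ->
  continuous (fun s => clamp01 (phi s / delta - INR (S k))) t.
Proof.
  intros Hc. apply continuous_clamp01, continuous_Rminus; [|apply continuous_const].
  apply (continuous_Rext (fun s => phi s * / delta)); [reflexivity|].
  apply continuous_Rmult; [auto|apply continuous_const].
Qed.

(* Layer cake: [phi <= delta + delta * sum_k clamp01 (phi / delta - (k + 1))]. *)
Lemma RInt_le_layers (phi : R -> R) delta n b : (forall t, continuous phi t) -> (forall t, 0 <= phi t) ->
  0 < delta -> 0 <= b -> (forall t, 0 <= t <= b -> phi t <= delta * (INR n + 1)) ->
  RInt phi 0 b <= delta * b + delta * sumN n (fun k => RInt (fun t => clamp01 (phi t / delta - INR (S k))) 0 b).
Proof.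
  intros Hc Hp Hd Hb Hmax.
  set (layers := fun t => sumN n (fun k => clamp01 (phi t / delta - INR (S k)))).
  assert (Hl : forall t, continuous layers t)
    by (intros; apply continuous_sumN; intros; now apply continuous_layer).
  apply Rle_trans with (RInt (fun t => delta + delta * layers t) 0 b).
  - apply RInt_Rle; [auto|now apply ex_RInt_Rcontinuous| |].
    + apply ex_RInt_Rcontinuous. intros. apply continuous_Rplus; [apply continuous_const|].
      apply continuous_Rmult; [apply continuous_const|auto].
    + intros t Ht.
      assert (Hx : 0 <= phi t / delta <= INR n + 1).
      { split; [apply Rmult_le_pos; [apply Hp|apply Rlt_le, Rinv_0_lt_compat; auto]|].
        apply (Rmult_le_reg_l delta); auto. unfold Rdiv. rewrite <- Rmult_assoc, Rinv_r_simpl_m by lra.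
        now apply Hmax. }
      pose proof (layer_sum_ge n _ Hx). unfold layers.
      set (x := phi t / delta) in *. assert (phi t = delta * x) by (unfold x; field; lra). nra.
  - unfold layers. rewrite RInt_Rplus, RInt_Rconst, RInt_Rscal, RInt_sumN.
    + right. ring.
    + intros. apply ex_RInt_Rcontinuous. intros. now apply continuous_layer.
    + now apply ex_RInt_Rcontinuous.
    + apply ex_RInt_const.
    + apply ex_RInt_Rcontinuous. intros. apply continuous_Rmult; [apply continuous_const|auto].
Qed.

Lemma bounded_RInt_of_finite_integral (phi : R -> R) (Sup : R -> R -> Prop) :
  (forall t, continuous phi t) -> (forall t, 0 <= phi t) ->
  (forall t y, 0 <= t -> y < phi t -> Sup t y) -> finite_integral Sup -> bounded_RInt phi.
Proof.
  intros Hc Hp HS [M HM]. exists M. intros b Hb. apply Rle_plus_epsilon. intros zeta Hz.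
  set (delta := zeta / (2 * (b + 1))).
  assert (Hd : 0 < delta) by (unfold delta; apply Rdiv_lt_0_compat; lra).
  destruct (continuity_ab_maj phi 0 b Hb) as [Mx [HMx _]].
  { intros c _. apply continuity_pt_filterlim. apply Hc. }
  destruct (INR_unbounded (phi Mx / delta)) as [n Hn].
  destruct (HM delta Hd n) as [ms [Hout Hsum]].
  set (z' := zeta / (2 * delta * (INR n + 1))).
  assert (Hz' : 0 < z') by (unfold z'; apply Rdiv_lt_0_compat; [lra|pose proof (pos_INR n); nra]).
  (* the [k]-th layer lives on the superlevel set [{phi > (k + 1) delta}] *)
  assert (Hlayer : forall k, (k < n)%nat -> RInt (fun t => clamp01 (phi t / delta - INR (S k))) 0 b <= ms k + z').
  { intros k Hk. apply (RInt_le_outer _ (fun t => 0 <= t /\ Sup t (INR (S k) * delta))); auto.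
    - intros. now apply continuous_layer.
    - intros; apply clamp01_range.
    - intros t Ht Hpos. split; [lra|]. apply HS; [lra|]. apply clamp01_pos in Hpos.
      apply (Rmult_lt_compat_r delta) in Hpos; auto.
      unfold Rdiv in Hpos. rewrite Rmult_minus_distr_r, Rmult_assoc, Rinv_l in Hpos by lra. lra. }
  assert (Hmax : forall t, 0 <= t <= b -> phi t <= delta * (INR n + 1)).
  { intros t Ht. apply Rle_trans with (phi Mx); [now apply HMx|].
    apply (Rmult_lt_compat_l delta) in Hn; [|exact Hd]. unfold Rdiv in Hn.
    rewrite <- Rmult_assoc, Rinv_r_simpl_m in Hn by lra. lra. }
  pose proof (RInt_le_layers phi delta n b Hc Hp Hd Hb Hmax) as Hint.
  assert (Hlayers : sumN n (fun k => RInt (fun t => clamp01 (phi t / delta - INR (S k))) 0 b)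
                    <= sumN n ms + INR n * z')
    by (rewrite <- sumN_const, <- sumN_plus; now apply sumN_le).
  assert (delta * b <= zeta / 2).
  { unfold delta. apply Rle_trans with (zeta / (2 * (b + 1)) * (b + 1)); [|right; field; lra].
    apply Rmult_le_compat_l; [apply Rlt_le, Rdiv_lt_0_compat; lra|lra]. }
  assert (delta * (INR n * z') <= zeta / 2).
  { unfold z'. pose proof (pos_INR n).
    replace (delta * (INR n * (zeta / (2 * delta * (INR n + 1))))) with (zeta / 2 * (INR n / (INR n + 1)))
      by (field; lra).
    assert (INR n / (INR n + 1) <= 1)
      by (apply Rmult_le_reg_r with (INR n + 1); [lra|]; unfold Rdiv; rewrite Rmult_assoc, Rinv_l; lra).
    nra. }
  nra.
Qed.

(** * Expansion of the payoff *)

Lemma expansion2_trans N K i k : (i < N)%nat -> (k < N)%nat ->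
  expansion2 (fun e => trans N K e i k) (kron i k) (K i k) (sumN N (fun l => K i l * K l k) / 2).
Proof.
  intros Hi Hk.
  assert (Hkron : forall l, (l < N)%nat -> sumN N (fun m => K l m * trans N K 0 m k) = K l k).
  { intros l Hl. rewrite (sumN_ext N _ (fun m => K l m * kron m k)) by (intros; now rewrite trans_0).
    now apply sumN_kron_r. }
  apply (expansion2_coef _ (trans N K 0 i k) (sumN N (fun l => K i l * trans N K 0 l k))
           (sumN N (fun l => K i l * sumN N (fun m => K l m * trans N K 0 m k)) / 2)).
  - now rewrite trans_0.
  - now apply Hkron.
  - f_equal. apply sumN_ext. intros l Hl. now rewrite Hkron.
  - apply (expansion2_of_is_derive (fun e => trans N K e i k) (fun t => sumN N (fun l => K i l * trans N K t l k))).
    + intros. now apply is_derive_trans.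
    + intros t. apply continuous_sumN. intros l Hl.
      apply continuous_Rmult; [apply continuous_const|now apply continuous_trans].
    + apply expansion1_of_is_derive.
      apply (is_derive_sumN N (fun l t => K i l * trans N K t l k)
               (fun l t => K i l * sumN N (fun m => K l m * trans N K t m k))).
      intros l Hl. apply is_derive_Rscal. now apply is_derive_trans.
Qed.

Lemma expansion2_trans_mul_opp N Q Qs i m : (i < N)%nat -> (m < N)%nat ->
  expansion2 (fun e => sumN N (fun k => trans N Q e i k * trans N Qs (- e) k m))
    (kron i m) (Q i m - Qs i m)
    (sumN N (fun l => Qs i l * Qs l m) / 2 - sumN N (fun k => Q i k * Qs k m)
     + sumN N (fun l => Q i l * Q l m) / 2).
Proof.
  intros Hi Hm. eapply expansion2_coef;
    [| | |apply (expansion2_sumN N (fun k e => trans N Q e i k * trans N Qs (- e) k m))].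
  4:{ intros k Hk. apply expansion2_mult; [now apply expansion2_trans|].
      apply (expansion2_ext (fun e => trans N (fun a b => - Qs a b) e k m));
        [intros; symmetry; now apply trans_opp|].
      now apply expansion2_trans. }
  - now apply (sumN_kron_l N i (fun k => kron k m)).
  - rewrite sumN_plus, sumN_kron_l, (sumN_kron_r N m (fun k => Q i k)) by auto. ring.
  - rewrite !sumN_plus, sumN_kron_l, (sumN_kron_r N m (fun k => sumN N (fun l => Q i l * Q l k) / 2)) by auto.
    rewrite (sumN_ext N (fun l => - Qs i l * - Qs l m) (fun l => Qs i l * Qs l m)) by (intros; ring).
    rewrite (sumN_ext N (fun k => Q i k * - Qs k m) (fun k => -1 * (Q i k * Qs k m))) by (intros; ring).
    rewrite sumN_scal_l. ring.
Qed.

Lemma trans_tail_integrand N Q Qs (g : nat -> R -> R) e i t : (i < N)%nat ->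
  sumN N (fun j => sumN N (fun k => trans N Q e i k * trans N Qs (t - e) k j) * g j t)
  = sumN N (fun m => sumN N (fun k => trans N Q e i k * trans N Qs (- e) k m)
                     * sumN N (fun j => trans N Qs t m j * g j t)).
Proof.
  intros Hi.
  rewrite (sumN_ext N _ (fun j => sumN N (fun m => sumN N (fun k => trans N Q e i k * trans N Qs (- e) k m)
                                                 * (trans N Qs t m j * g j t)))).
  - rewrite sumN_comm. apply sumN_ext. intros m Hm. now rewrite sumN_scal_l.
  - intros j Hj.
    transitivity (sumN N (fun m => sumN N (fun k => trans N Q e i k * trans N Qs (- e) k m)
                                   * trans N Qs t m j) * g j t).
    + f_equal.
      rewrite (sumN_ext N _ (fun k => sumN N (fun m => trans N Q e i k * (trans N Qs (- e) k m * trans N Qs t m j)))).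
      * rewrite sumN_comm. apply sumN_ext. intros m Hm. rewrite <- sumN_scal_r. apply sumN_ext. intros; ring.
      * intros k Hk. replace (t - e) with (- e + t) by ring. rewrite trans_add by auto.
        now rewrite <- sumN_scal_l.
    + rewrite <- sumN_scal_r. apply sumN_ext. intros; ring.
Qed.

(* Once [G] is eliminated, the raw coefficient of [e ^ 2] in [F_i - F(i, Q (x)_e Qs)] is
   [(Lambda(Qs) - Lambda(Q)) / 2]. *)
Lemma second_order_coef_eq N (Q Qs : nat -> nat -> R) i (F G f0 f0s ft0s : nat -> R) ft0 :
  (i < N)%nat -> (forall j, (j < N)%nat -> G j = - f0s j - sumN N (fun l => Qs j l * F l)) ->
  0 - ((ft0 + sumN N (fun j => Q i j * f0 j)) / 2
       + sumN N (fun m => kron i m * (0 - (ft0s m + sumN N (fun j => Qs m j * f0s j)) / 2)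
                          + (Q i m - Qs i m) * (0 - f0s m)
                          + (sumN N (fun l => Qs i l * Qs l m) / 2 - sumN N (fun k => Q i k * Qs k m)
                             + sumN N (fun l => Q i l * Q l m) / 2) * (F m - 0)))
  = / 2 * ((ft0s i + sumN N (fun j => Qs i j * (2 * G j + (f0s j + sumN N (fun l => Qs j l * F l)))))
           - (ft0 + sumN N (fun j => Q i j * (2 * G j + (f0 j + sumN N (fun l => Q j l * F l)))))).
Proof.
  intros Hi HG.
  rewrite (sumN_ext N (fun j => Qs i j * (2 * G j + (f0s j + sumN N (fun l => Qs j l * F l))))
             (fun j => -1 * (Qs i j * f0s j) + -1 * (Qs i j * sumN N (fun l => Qs j l * F l))))
    by (intros; rewrite HG by auto; ring).
  rewrite (sumN_ext N (fun j => Q i j * (2 * G j + (f0 j + sumN N (fun l => Q j l * F l))))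
             (fun j => -2 * (Q i j * f0s j) + -2 * (Q i j * sumN N (fun l => Qs j l * F l))
                       + Q i j * f0 j + Q i j * sumN N (fun l => Q j l * F l)))
    by (intros; rewrite HG by auto; ring).
  rewrite (sumN_ext N (fun m => kron i m * _ + _ + _)
             (fun m => kron i m * (0 - (ft0s m + sumN N (fun j => Qs m j * f0s j)) / 2)
                       + (-1 * (Q i m * f0s m) + Qs i m * f0s m)
                       + (/ 2 * (sumN N (fun l => Qs i l * Qs l m) * F m)
                          + -1 * (sumN N (fun k => Q i k * Qs k m) * F m)
                          + / 2 * (sumN N (fun l => Q i l * Q l m) * F m))))
    by (intros; field).
  rewrite !sumN_plus, sumN_kron_l, !sumN_scal_l, !sumN_mat_vec by exact Hi.
  field.
Qed.

Lemma normN_nonneg N q : 0 <= normN N q.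
Proof. apply sumN_nonneg. intros. apply Rabs_pos. Qed.

Lemma bounded_RInt_payoff N D (ff : R -> nat -> (nat -> R) -> R) K (g : nat -> R -> R) :
  condI N D ff -> inQ N D K -> (forall j t, (j < N)%nat -> continuous (g j) t) ->
  (forall j t, (j < N)%nat -> 0 <= t -> g j t = ff t j (K j)) ->
  bounded_RInt (fun t => sumN N (fun j => Rabs (g j t))).
Proof.
  intros HI HK Hc Heq. apply bounded_RInt_sumN; [intros; apply continuous_Rabs_comp, Hc; auto|].
  intros j Hj. pose proof (normN_nonneg N (K j)).
  apply (bounded_RInt_of_finite_integral _ (fun t y => exists i q, (i < N)%nat /\ D i q /\
           normN N q <= normN N (K j) + 1 /\ y < Rabs (ff t i q))).
  - intros t. now apply continuous_Rabs_comp, Hc.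
  - intros. apply Rabs_pos.
  - intros t y Ht Hy. exists j, (K j). rewrite <- Heq by auto. repeat split; auto; lra.
  - apply HI. lra.
Qed.

Lemma Rabs_sumN_trans_le N K (g : nat -> R) t m : generator N K -> 0 <= t -> (m < N)%nat ->
  Rabs (sumN N (fun j => trans N K t m j * g j)) <= sumN N (fun j => Rabs (g j)).
Proof.
  intros HK Ht Hm. eapply Rle_trans; [apply Rabs_sumN_le|]. apply sumN_le. intros j Hj.
  rewrite Rabs_mult. pose proof (Rabs_trans_le_1 N K HK t m j Ht Hm Hj).
  pose proof (Rabs_pos (g j)). pose proof (Rabs_pos (trans N K t m j)). nra.
Qed.

Lemma Fval_is_RInt_inf N K (g : nat -> R -> R) ff m : generator N K -> (m < N)%nat ->
  (forall j t, (j < N)%nat -> continuous (g j) t) ->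
  (forall j t, (j < N)%nat -> 0 <= t -> g j t = ff t j (K j)) ->
  bounded_RInt (fun t => sumN N (fun j => Rabs (g j t))) ->
  is_RInt_inf (fun t => sumN N (fun j => trans N K t m j * g j t)) (Fval N ff K m).
Proof.
  intros HK Hm Hc Heq HB.
  assert (HPc : forall t, continuous (fun t => sumN N (fun j => Rabs (g j t))) t)
    by (intros; apply continuous_sumN; intros; apply continuous_Rabs_comp, Hc; auto).
  assert (Hhc : forall t, continuous (fun t => sumN N (fun j => trans N K t m j * g j t)) t).
  { intros t. apply continuous_sumN. intros j Hj.
    apply continuous_Rmult; [now apply continuous_trans|auto]. }
  destruct (is_RInt_inf_dominated _ HPc HB _ Hhc) as [l Hl].
  { intros t Ht. now apply Rabs_sumN_trans_le. }
  assert (Hl' : is_RInt_inf (fun t => sumN N (fun j => trans N K t m j * ff t j (K j))) l).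
  { eapply is_RInt_inf_ext; [|exact Hl]. intros t Ht. apply sumN_ext. intros j Hj. rewrite Heq; auto; lra. }
  unfold Fval. now rewrite (int0inf_unique _ _ Hl').
Qed.

Lemma limit_zero_of_dominated (beta Phi : R -> R) l :
  (forall t, continuous Phi t) -> bounded_RInt Phi -> (forall t, 0 <= t -> Rabs (beta t) <= Phi t) ->
  (forall eta, 0 < eta -> exists B, forall b, B <= b -> Rabs (beta b - l) < eta) -> l = 0.
Proof.
  intros Hc [M HM] Hdom Hlim. apply Classical_Prop.NNPP. intros Hne.
  set (c := Rabs l). assert (Hc0 : 0 < c) by (apply Rabs_pos_lt; auto).
  destruct (Hlim (c / 2) ltac:(lra)) as [B0 HB].
  pose proof (Rmax_l B0 0). pose proof (Rmax_r B0 0). set (B := Rmax B0 0) in *.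
  assert (Hlow : forall t, B <= t -> c / 2 <= Phi t).
  { intros t Ht. specialize (HB t ltac:(lra)). pose proof (Hdom t ltac:(lra)).
    assert (c <= Rabs (beta t - l) + Rabs (beta t)).
    { unfold c. replace (Rabs l) with (Rabs (- (beta t - l) + beta t)) by (f_equal; ring).
      eapply Rle_trans; [apply Rabs_triang|]. rewrite Rabs_Ropp. lra. }
    lra. }
  set (T := 2 * (Rabs M + 1) / c).
  assert (HT : 0 < T) by (unfold T; apply Rdiv_lt_0_compat; pose proof (Rabs_pos M); lra).
  specialize (HM (B + T) ltac:(lra)).
  assert (Ex : forall a b, ex_RInt Phi a b) by (intros; now apply ex_RInt_Rcontinuous).
  rewrite <- (RInt_RChasles Phi 0 B (B + T)) in HM by auto.
  assert (0 <= RInt Phi 0 B).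
  { apply RInt_Rnonneg; [lra|auto|]. intros t Ht.
    pose proof (Hdom t ltac:(lra)). pose proof (Rabs_pos (beta t)). lra. }
  assert (Hmid : RInt (fun _ => c / 2) B (B + T) <= RInt Phi B (B + T))
    by (apply RInt_Rle; [lra|apply ex_RInt_const|auto|intros; apply Hlow; lra]).
  rewrite RInt_Rconst in Hmid. replace (B + T - B) with T in Hmid by ring.
  assert (T * (c / 2) = Rabs M + 1) by (unfold T; field; lra).
  pose proof (Rle_abs M). lra.
Qed.

Lemma is_derive_trans_mul N K (g g' : nat -> R -> R) k (t : R) : (k < N)%nat ->
  (forall j, (j < N)%nat -> is_derive (g j) t (g' j t)) ->
  is_derive (fun t => sumN N (fun j => trans N K t k j * g j t)) t
    (sumN N (fun l => K k l * sumN N (fun j => trans N K t l j * g j t))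
     + sumN N (fun j => trans N K t k j * g' j t)).
Proof.
  intros Hk Hd.
  apply (is_derive_Rext (fun t => sumN N (fun j => trans N K t k j * g j t)) _ t
           (sumN N (fun j => sumN N (fun l => K k l * trans N K t l j) * g j t + trans N K t k j * g' j t)));
    [reflexivity| |].
  - rewrite sumN_plus.
    now rewrite (sumN_mat_vec N (fun l => K k l) (fun l j => trans N K t l j) (fun j => g j t)).
  - apply (is_derive_sumN N (fun j t => trans N K t k j * g j t)
             (fun j t => sumN N (fun l => K k l * trans N K t l j) * g j t + trans N K t k j * g' j t)).
    intros j Hj. apply is_derive_Rmult; [now apply is_derive_trans|auto].
Qed.

Lemma value_of_derivative N K (g g' : nat -> R -> R) (F : nat -> R) G k : generator N K -> (k < N)%nat ->
  (forall j t, (j < N)%nat -> is_derive (g j) t (g' j t)) ->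
  (forall j t, (j < N)%nat -> continuous (g' j) t) ->
  bounded_RInt (fun t => sumN N (fun j => Rabs (g j t))) ->
  (forall m, (m < N)%nat -> is_RInt_inf (fun t => sumN N (fun j => trans N K t m j * g j t)) (F m)) ->
  is_RInt_inf (fun t => sumN N (fun j => trans N K t k j * g' j t)) G ->
  G = - g k 0 - sumN N (fun l => K k l * F l).
Proof.
  intros HK Hk Hd Hd'c HB HF HG.
  assert (Hgc : forall j t, (j < N)%nat -> continuous (g j) t)
    by (intros; eapply continuous_of_is_derive; now apply Hd).
  set (beta := fun t => sumN N (fun j => trans N K t k j * g j t)).
  set (beta' := fun t => sumN N (fun l => K k l * sumN N (fun j => trans N K t l j * g j t))
                         + sumN N (fun j => trans N K t k j * g' j t)).
  assert (Hc' : forall t, continuous beta' t).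
  { intros t. unfold beta'. apply continuous_Rplus; apply continuous_sumN; intros l Hl.
    - apply continuous_Rmult; [apply continuous_const|]. apply continuous_sumN. intros j Hj.
      apply continuous_Rmult; [now apply continuous_trans|auto].
    - apply continuous_Rmult; [now apply continuous_trans|auto]. }
  assert (HIC : is_RInt_inf beta' (sumN N (fun l => K k l * F l) + G)).
  { apply is_RInt_inf_plus; auto.
    apply (is_RInt_inf_sumN N (fun l t => K k l * sumN N (fun j => trans N K t l j * g j t))).
    intros l Hl. now apply is_RInt_inf_scal, HF. }
  assert (Hb0 : beta 0 = g k 0).
  { unfold beta. rewrite (sumN_ext N _ (fun j => kron k j * g j 0)) by (intros; now rewrite trans_0).
    now apply sumN_kron_l. }
  (* [beta b = beta 0 + int_0^b beta'] converges; [beta] is dominated by an integrable function,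
     so the limit vanishes *)
  cut (g k 0 + (sumN N (fun l => K k l * F l) + G) = 0); [lra|].
  apply (limit_zero_of_dominated beta (fun t => sumN N (fun j => Rabs (g j t)))); auto.
  - intros t. apply continuous_sumN. intros. apply continuous_Rabs_comp, Hgc; auto.
  - intros t Ht. now apply Rabs_sumN_trans_le.
  - intros eta Heta. destruct (HIC eta Heta) as [B [_ HBb]]. exists B. intros b Hb.
    destruct (HBb b Hb) as [_ Hlt].
    rewrite (is_RInt_unique beta' 0 b (beta b - beta 0)) in Hlt
      by (apply (is_RInt_derive (V := R_CompleteNormedModule)); intros; auto;
          apply is_derive_trans_mul; auto).
    rewrite Hb0 in Hlt. replace (beta b - (g k 0 + (sumN N (fun l => K k l * F l) + G)))
      with (beta b - g k 0 - (sumN N (fun l => K k l * F l) + G)) by ring. exact Hlt.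
Qed.

Section Payoff.

Variables (N : nat) (D : nat -> (nat -> R) -> Prop) (f ft : R -> nat -> (nat -> R) -> R).
Hypotheses (HD : forall i q, (i < N)%nat -> D i q -> inE N i q) (HI : condI N D f) (HIt : condI N D ft)
  (HC1 : forall i q, (i < N)%nat -> D i q -> C1_nonneg (fun t => f t i q) (fun t => ft t i q)).

Definition pay (K : nat -> nat -> R) j : R -> R := C1_ext (fun t => f t j (K j)) (fun t => ft t j (K j)).
Definition pay' (K : nat -> nat -> R) j : R -> R := C1_ext_deriv (fun t => ft t j (K j)).

Lemma pay_nonneg K j t : 0 <= t -> pay K j t = f t j (K j).
Proof. apply C1_ext_nonneg. Qed.

Lemma pay'_nonneg K j t : 0 <= t -> pay' K j t = ft t j (K j).
Proof. apply C1_ext_deriv_nonneg. Qed.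

Section Generator.

Variable K : nat -> nat -> R.
Hypothesis HK : inQ N D K.

Let HKgen : generator N K := generator_of_inQ N D K HD HK.

Lemma is_derive_pay j t : (j < N)%nat -> is_derive (pay K j) t (pay' K j t).
Proof. intros. apply is_derive_C1_ext, HC1; auto. Qed.

Lemma continuous_pay j t : (j < N)%nat -> continuous (pay K j) t.
Proof. intros. eapply continuous_of_is_derive. now apply is_derive_pay. Qed.

Lemma continuous_pay' j t : (j < N)%nat -> continuous (pay' K j) t.
Proof. intros. apply (continuous_C1_ext_deriv (fun t => f t j (K j))), HC1; auto. Qed.

Lemma bounded_RInt_pay : bounded_RInt (fun t => sumN N (fun j => Rabs (pay K j t))).
Proof.
  apply (bounded_RInt_payoff N D f K); auto.
  - intros. now apply continuous_pay.
  - intros. now apply pay_nonneg.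
Qed.

Lemma bounded_RInt_pay' : bounded_RInt (fun t => sumN N (fun j => Rabs (pay' K j t))).
Proof.
  apply (bounded_RInt_payoff N D ft K); auto.
  - intros. now apply continuous_pay'.
  - intros. now apply pay'_nonneg.
Qed.

Lemma is_RInt_inf_Fval m : (m < N)%nat ->
  is_RInt_inf (fun t => sumN N (fun j => trans N K t m j * pay K j t)) (Fval N f K m).
Proof.
  intros Hm. apply (Fval_is_RInt_inf N K _ f m HKgen Hm); auto using bounded_RInt_pay.
  - intros. now apply continuous_pay.
  - intros. now apply pay_nonneg.
Qed.

Lemma Fval_ft_eq k : (k < N)%nat -> Fval N ft K k = - f 0 k (K k) - sumN N (fun l => K k l * Fval N f K l).
Proof.
  intros Hk. rewrite <- (pay_nonneg K k 0) by lra.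
  apply (value_of_derivative N K (pay K) (pay' K) _ _ k HKgen Hk).
  - intros. now apply is_derive_pay.
  - intros. now apply continuous_pay'.
  - exact bounded_RInt_pay.
  - intros. now apply is_RInt_inf_Fval.
  - apply (Fval_is_RInt_inf N K _ ft k HKgen Hk); auto using bounded_RInt_pay'.
    + intros. now apply continuous_pay'.
    + intros. now apply pay'_nonneg.
Qed.

Lemma expansion2_RInt_pay m : (m < N)%nat ->
  expansion2 (fun e => RInt (fun t => sumN N (fun j => trans N K t m j * pay K j t)) 0 e)
    0 (f 0 m (K m)) ((ft 0 m (K m) + sumN N (fun j => K m j * f 0 j (K j))) / 2).
Proof.
  intros Hm.
  set (psi := fun t => sumN N (fun j => trans N K t m j * pay K j t)).
  set (dpsi0 := sumN N (fun j => sumN N (fun l => K m l * trans N K 0 l j) * pay K j 0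
                                 + trans N K 0 m j * pay' K j 0)).
  apply (expansion2_coef _ 0 (psi 0) (dpsi0 / 2)); [reflexivity| | |].
  - unfold psi. rewrite (sumN_ext N _ (fun j => kron m j * pay K j 0)) by (intros; now rewrite trans_0).
    rewrite sumN_kron_l by exact Hm. now apply pay_nonneg.
  - f_equal. unfold dpsi0. rewrite sumN_plus, Rplus_comm.
    rewrite (sumN_ext N (fun j => trans N K 0 m j * pay' K j 0) (fun j => kron m j * pay' K j 0))
      by (intros; now rewrite trans_0).
    rewrite sumN_kron_l, pay'_nonneg by (auto; lra). f_equal.
    apply sumN_ext. intros j Hj. rewrite pay_nonneg by lra. f_equal.
    rewrite (sumN_ext N _ (fun l => K m l * kron l j)) by (intros; now rewrite trans_0).
    now apply sumN_kron_r.
  - apply expansion2_RInt; [|reflexivity|].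
    + intros. apply ex_RInt_Rcontinuous. intros t. apply continuous_sumN. intros j Hj.
      apply continuous_Rmult; [now apply continuous_trans|now apply continuous_pay].
    + apply expansion1_of_is_derive.
      apply (is_derive_sumN N (fun j t => trans N K t m j * pay K j t)
               (fun j t => sumN N (fun l => K m l * trans N K t l j) * pay K j t
                           + trans N K t m j * pay' K j t)).
      intros j Hj. apply is_derive_Rmult; [now apply is_derive_trans|now apply is_derive_pay].
Qed.

End Generator.

Variables (Q Qs : nat -> nat -> R) (i : nat).
Hypotheses (HQ : inQ N D Q) (HQs : inQ N D Qs) (Hi : (i < N)%nat).

(* Markov property at time [e], with [P_Qs (t - e) = P_Qs (- e) P_Qs t] for the tail. *)
Lemma Fconcat_decompose e : 0 < e ->
  Fconcat N f Q Qs e i = RInt (fun t => sumN N (fun j => trans N Q t i j * pay Q j t)) 0 e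
    + sumN N (fun m => sumN N (fun k => trans N Q e i k * trans N Qs (- e) k m)
                       * (Fval N f Qs m - RInt (fun t => sumN N (fun j => trans N Qs t m j * pay Qs j t)) 0 e)).
Proof.
  intros He.
  set (W := fun m => sumN N (fun k => trans N Q e i k * trans N Qs (- e) k m)).
  set (head := fun t => sumN N (fun j => trans N Q t i j * pay Q j t)).
  set (u := fun m t => sumN N (fun j => trans N Qs t m j * pay Qs j t)).
  set (tail := fun t => sumN N (fun m => W m * u m t)).
  assert (Hu : forall m t, (m < N)%nat -> continuous (u m) t).
  { intros. apply continuous_sumN. intros. apply continuous_Rmult; [now apply continuous_trans|].
    now apply continuous_pay. }
  assert (Htail : forall t, continuous tail t).
  { intros. apply continuous_sumN. intros. apply continuous_Rmult; [apply continuous_const|auto]. }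
  assert (Hhead : forall t, continuous head t).
  { intros. apply continuous_sumN. intros. apply continuous_Rmult; [now apply continuous_trans|].
    now apply continuous_pay. }
  set (integrand := fun t => if Rle_dec t e then sumN N (fun j => trans N Q t i j * f t j (Q j))
    else sumN N (fun j => sumN N (fun k => trans N Q e i k * trans N Qs (t - e) k j) * f t j (Qs j))).
  assert (H1 : forall t, 0 < t <= e -> integrand t = head t).
  { intros t Ht. unfold integrand, head. destruct (Rle_dec t e); [|lra].
    apply sumN_ext. intros. now rewrite pay_nonneg by lra. }
  assert (H2 : forall t, e < t -> integrand t = tail t).
  { intros t Ht. unfold integrand, tail, u, W. destruct (Rle_dec t e); [lra|].
    rewrite <- (trans_tail_integrand N Q Qs (pay Qs)) by exact Hi.
    apply sumN_ext. intros. now rewrite pay_nonneg by lra. }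
  assert (Htail_lim : is_RInt_inf tail (sumN N (fun m => W m * Fval N f Qs m))).
  { apply (is_RInt_inf_sumN N (fun m t => W m * u m t)). intros m Hm.
    now apply is_RInt_inf_scal, is_RInt_inf_Fval. }
  assert (Htail_e : RInt tail 0 e = sumN N (fun m => W m * RInt (u m) 0 e)).
  { unfold tail. rewrite RInt_sumN.
    - apply sumN_ext. intros m Hm. apply RInt_Rscal. apply ex_RInt_Rcontinuous. intros. now apply Hu.
    - intros m Hm. apply ex_RInt_Rcontinuous. intros. apply continuous_Rmult; [apply continuous_const|auto]. }
  change (Fconcat N f Q Qs e i) with (int0inf integrand).
  rewrite (int0inf_unique _ _ (is_RInt_inf_splice integrand head tail e _ He Hhead Htail H1 H2 Htail_lim)).
  rewrite Htail_e, <- sumN_minus. f_equal. apply sumN_ext. intros. unfold W, u. cbv beta. ring.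
Qed.

Lemma expansion2_Fval_sub_Fconcat :
  expansion2 (fun e => Fval N f Qs i - Fconcat N f Q Qs e i) 0
    (Gam N f Qs i (Qs i) - Gam N f Qs i (Q i)) (/ 2 * (Lam N f ft Qs i Qs - Lam N f ft Qs i Q)).
Proof.
  set (F := Fval N f Qs).
  set (A := fun e => RInt (fun t => sumN N (fun j => trans N Q t i j * pay Q j t)) 0 e).
  set (B := fun m e => RInt (fun t => sumN N (fun j => trans N Qs t m j * pay Qs j t)) 0 e).
  set (W := fun m e => sumN N (fun k => trans N Q e i k * trans N Qs (- e) k m)).
  apply (expansion2_ext (fun e => F i - (A e + sumN N (fun m => W m e * (F m - B m e))))).
  { intros e He. now rewrite Fconcat_decompose. }
  eapply expansion2_coef; [| | |apply expansion2_minus; [apply expansion2_const|apply expansion2_plus]].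
  4:{ now apply expansion2_RInt_pay. }
  4:{ apply expansion2_sumN. intros m Hm. apply expansion2_mult; [now apply expansion2_trans_mul_opp|].
      apply expansion2_minus; [apply expansion2_const|now apply expansion2_RInt_pay]. }
  - rewrite (sumN_kron_l N i (fun m => F m - 0)) by exact Hi. ring.
  - unfold Gam, dot. rewrite sumN_plus, (sumN_kron_l N i (fun m => 0 - f 0 m (Qs m))) by exact Hi.
    rewrite (sumN_ext N (fun m => (Q i m - Qs i m) * (F m - 0)) (fun m => Q i m * F m - Qs i m * F m))
      by (intros; ring).
    rewrite sumN_minus. unfold F. ring.
  - unfold Lam, Gam, dot.
    apply (second_order_coef_eq N Q Qs i F (Fval N ft Qs) (fun j => f 0 j (Q j)) (fun j => f 0 j (Qs j))
             (fun j => ft 0 j (Qs j)) (ft 0 i (Q i)) Hi).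
    intros j Hj. now apply Fval_ft_eq.
Qed.

End Payoff.

Theorem mainTheorem3 (N : nat) (D : nat -> (nat -> R) -> Prop)
  (f ft : R -> nat -> (nat -> R) -> R)
  (HD : forall i q, (i < N)%nat -> D i q -> inE N i q)
  (HI : condI N D f)
  (HC1 : forall i q, (i < N)%nat -> D i q ->
           C1_nonneg (fun t => f t i q) (fun t => ft t i q))
  (HIt : condI N D ft)
  (HR : condR N D f ft)
  (i : nat) (Q Qs : nat -> nat -> R)
  (Hi : (i < N)%nat) (HQ : inQ N D Q) (HQs : inQ N D Qs) :
  forall eta, 0 < eta -> exists delta, 0 < delta /\
    forall e, 0 < e < delta ->
      Rabs (Fval N f Qs i - Fconcat N f Q Qs e i
            - ((Gam N f Qs i (Qs i) - Gam N f Qs i (Q i)) * e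
               + / 2 * (Lam N f ft Qs i Qs - Lam N f ft Qs i Q) * e ^ 2))
      <= eta * e ^ 2.
Proof.
  intros eta Heta.
  destruct (expansion2_Fval_sub_Fconcat N D f ft HD HI HIt HC1 Q Qs i HQ HQs Hi eta Heta)
    as [delta [Hdelta Hexp]].
  exists delta. split; [exact Hdelta|]. intros e He.
  specialize (Hexp e He). now rewrite Rplus_0_l in Hexp.
Qed.
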